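(* Let $1\le p<\infty$, $N\ge2$, and for $1\le i\le N$ let $T_i=T_{f_i,\omega^{(i)}}$ be unilateral pseudo-shifts on $\ell^p(\mathbb{N})$ with maps $f_i$ and weights $\omega^{(i)}=(w^{(i)}_{f_i(m)})_m$; let $W^{(i)}_{m,n}=\prod_{\nu=1}^nw^{(i)}_{f_i^\nu(m)}$. The following are equivalent: (i) $T_1,\dots,T_N$ are s-hypercyclic. (ii) $T_1,\dots,T_N$ satisfy the Simultaneous Blow-up/Collapse Criterion. (iii) There is a strictly increasing sequence $(n_k)$ of positive integers such that (a) $|W^{(i)}_{m,n_k}|\to\infty$ as $k\to\infty$ for all $m\in\mathbb{N}$, $1\le i\le N$; and (b) for each $\epsilon>0$, $K,M\in\mathbb{N}$ and nonzero scalars $a_1,\dots,a_M$, there is $k\ge K$ such that for all $1\le i,\ell\le N$ with $i\neq\ell$: $\left|\frac{W^{(i)}_{f_i^{-n_k}(j),n_k}}{W^{(\ell)}_{f_\ell^{-n_k}(j),n_k}}\right|<\epsilon$ whenever $j\in f_\ell^{n_k}([M])\cap f_i^{n_k}(\mathbb{N}\setminus[M])$, and $\left|\frac{W^{(i)}_{f_i^{-n_k}(j),n_k}}{W^{(\ell)}_{f_\ell^{-n_k}(j),n_k}}-\frac{a_{f_i^{-n_k}(j)}}{a_{f_\ell^{-n_k}(j)}}\right|<\epsilon$ whenever $j\in f_\ell^{n_k}([M])\cap f_i^{n_k}([M])$.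
   Context: $\mathbb{N}=\{1,2,\dots\}$; $\{e_m\}$ is the canonical basis of $\ell^p(\mathbb{N})$ over $\mathbb{K}\in\{\mathbb{R},\mathbb{C}\}$. For a strictly increasing $f:\mathbb{N}\to\mathbb{N}$ with $f(1)>1$ and a bounded, nonzero sequence of scalars $\omega=(w_{f(m)})_m$, $T_{f,\omega}(\sum_m\alpha_me_m)=\sum_mw_{f(m)}\alpha_{f(m)}e_m$. $[M]=\{1,\dots,M\}$, $f^n$ the $n$-fold composition, $f(A)=\{f(m):m\in A\}$, $f^{-n}$ the inverse of $f^n$ on $f^n(\mathbb{N})$. Operators $T_1,\dots,T_N$ on $X$ are s-hypercyclic if some $x\in X$ has the closure of $\{(T_1^nx,\dots,T_N^nx):n\in\mathbb{N}\}$ containing the diagonal $\{(y,\dots,y):y\in X\}$ of $\oplus_{i=1}^NX$. They satisfy the Simultaneous Blow-up/Collapse Criterion if there exist an increasing sequence $(n_k)$, a dense $X_0\subset X$ and maps $S_k:X_0\to X$ with $T_i^{n_k}x\to0$ for all $x\in X_0$, $1\le i\le N$, and such that for each $\epsilon>0$, $K\in\mathbb{N}$, $x_0\in X_0$ there is $k\ge K$ with $\|S_k(x_0)\|<\epsilon$ and $\|T_i^{n_k}S_k(x_0)-x_0\|<\epsilon$ for all $i$. *)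

From Stdlib Require Import Reals.
From Coquelicot Require Import Coquelicot.
Open Scope R_scope.

Record scalars := Scalars {
  sc :> Type;
  s0 : sc; s1 : sc;
  sadd : sc -> sc -> sc;
  sopp : sc -> sc;
  smul : sc -> sc -> sc;
  sinv : sc -> sc;
  sabs : sc -> R }.

Definition RScal : scalars :=
  Scalars R 0 1 Rplus Ropp Rmult Rinv Rabs.
Definition CScal : scalars :=
  Scalars C (RtoC 0) (RtoC 1) Cplus Copp Cmult Cinv Cmod.

Section Defs.
Variable K : scalars.

Definition ssub (x y : K) : K := sadd K x (sopp K y).
Definition sdiv (x y : K) : K := smul K x (sinv K y).

(* sequences indexed by N = {1,2,...}; the entry at index 0 is unused and
   required to be 0 for elements of l^p *)
Definition seqK := nat -> K.

Definition rpow (a p : R) : R :=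
  if Req_EM_T a 0 then 0 else Rpower a p.

Definition in_lp (p : R) (x : seqK) : Prop :=
  x 0%nat = s0 K /\ ex_series (fun m => rpow (sabs K (x m)) p).

Definition lpnorm (p : R) (x : seqK) : R :=
  rpow (Series (fun m => rpow (sabs K (x m)) p)) (/ p).

Definition lpdist (p : R) (x y : seqK) : R :=
  lpnorm p (fun m => ssub (x m) (y m)).

Definition pshift (f : nat -> nat) (w : nat -> K) (x : seqK) : seqK :=
  fun m => match m with
           | O => s0 K
           | S _ => smul K (w (f m)) (x (f m))
           end.

Definition pshift_iter (n : nat) (f : nat -> nat) (w : nat -> K) (x : seqK)
  : seqK := Nat.iter n (pshift f w) x.

Definition admissible_map (f : nat -> nat) : Prop :=
  (1 < f 1%nat)%nat /\ forall m, (1 <= m)%nat -> (f m < f (S m))%nat.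

Definition admissible_weight (f : nat -> nat) (w : nat -> K) : Prop :=
  (exists B, forall m, (1 <= m)%nat -> sabs K (w (f m)) <= B) /\
  (exists m, (1 <= m)%nat /\ w (f m) <> s0 K).

Fixpoint Wprod (f : nat -> nat) (w : nat -> K) (m n : nat) : K :=
  match n with
  | O => s1 K
  | S n' => smul K (Wprod f w m n') (w (Nat.iter (S n') f m))
  end.

(* s-hypercyclicity of T_0,...,T_{N-1} (indices 0..N-1 stand for 1..N):
   some x in l^p has orbit closure (product topology on the N-fold direct sum)
   containing the diagonal *)
Definition s_hypercyclic (p : R) (N : nat) (f : nat -> nat -> nat)
  (w : nat -> nat -> K) : Prop :=
  exists x, in_lp p x /\
    forall y, in_lp p y -> forall eps, 0 < eps ->
      exists n, (1 <= n)%nat /\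
        forall i, (i < N)%nat -> lpdist p (pshift_iter n (f i) (w i) x) y < eps.

Definition SBCC (p : R) (N : nat) (f : nat -> nat -> nat)
  (w : nat -> nat -> K) : Prop :=
  exists (nk : nat -> nat) (X0 : seqK -> Prop) (Sk : nat -> seqK -> seqK),
    (1 <= nk 0%nat)%nat /\ (forall k, (nk k < nk (S k))%nat) /\
    (forall x, X0 x -> in_lp p x) /\
    (forall y, in_lp p y -> forall eps, 0 < eps ->
        exists x, X0 x /\ lpdist p x y < eps) /\
    (forall k x, X0 x -> in_lp p (Sk k x)) /\
    (forall x, X0 x -> forall i, (i < N)%nat ->
        forall eps, 0 < eps -> exists K0, forall k, (K0 <= k)%nat ->
          lpnorm p (pshift_iter (nk k) (f i) (w i) x) < eps) /\
    (forall eps, 0 < eps -> forall K0 x0, X0 x0 ->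
        exists k, (K0 <= k)%nat /\ lpnorm p (Sk k x0) < eps /\
          forall i, (i < N)%nat ->
            lpdist p (pshift_iter (nk k) (f i) (w i) (Sk k x0)) x0 < eps).

(* condition (iii); for j = f_l^{n}(m) = f_i^{n}(m') we have
   f_l^{-n}(j) = m and f_i^{-n}(j) = m' *)
Definition weight_condition (N : nat) (f : nat -> nat -> nat)
  (w : nat -> nat -> K) : Prop :=
  exists nk : nat -> nat,
    (1 <= nk 0%nat)%nat /\ (forall k, (nk k < nk (S k))%nat) /\
    (forall m i, (1 <= m)%nat -> (i < N)%nat ->
       forall B, exists K0, forall k, (K0 <= k)%nat ->
         B < sabs K (Wprod (f i) (w i) m (nk k))) /\
    (forall eps, 0 < eps -> forall (K0 M : nat) (a : nat -> K),
       (forall j, (1 <= j <= M)%nat -> a j <> s0 K) ->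
       exists k, (K0 <= k)%nat /\
         forall i l, (i < N)%nat -> (l < N)%nat -> i <> l ->
           (forall m m', (1 <= m <= M)%nat -> (M < m')%nat ->
              Nat.iter (nk k) (f l) m = Nat.iter (nk k) (f i) m' ->
              sabs K (sdiv (Wprod (f i) (w i) m' (nk k))
                           (Wprod (f l) (w l) m (nk k))) < eps) /\
           (forall m m', (1 <= m <= M)%nat -> (1 <= m' <= M)%nat ->
              Nat.iter (nk k) (f l) m = Nat.iter (nk k) (f i) m' ->
              sabs K (ssub (sdiv (Wprod (f i) (w i) m' (nk k))
                                 (Wprod (f l) (w l) m (nk k)))
                           (sdiv (a m') (a m))) < eps)).

End Defs.

(** The proof rests on the explicit formula
    (T_i^n x)_m = W^{(i)}_{m,n} x_{f_i^n(m)}.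

    Both (i) and (ii) yield, for every target z and arbitrarily large n, a
    vector u with small coordinates beyond n whose n-th iterates under all
    T_i are coordinatewise close to z.  Choosing z equal to a on [M] and to a
    small nonzero constant on a longer window forces the weights to blow up
    and the ratios of (iii)(b) to be small, resp. close to a_{m'}/a_m; a
    diagonal choice of n_k over a countable dense family of finitely
    supported targets then gives (iii).

    Conversely, under (iii) the block vector
    S_n z = sum_{l, m <= M} z_m / W^{(l)}_{m,n} e_{f_l^n(m)}
    has small norm, and T_i^n S_n z - z is controlled precisely by the
    ratios in (iii)(b).  With X_0 the finitely supported vectors this is
    (ii); and a sum of such blocks with disjoint supports, whose norms decay
    geometrically faster than the operator norms |T_i^n| <= beta^n grow, is
    an s-hypercyclic vector, which gives (i). *)

From Stdlib Require Import Reals Lra Lia ZArith List Classical ClassicalEpsilon Cantor.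
From Coquelicot Require Import Coquelicot.
Open Scope R_scope.

Section Scalars.
Variable K : scalars.
Hypothesis HK : K = RScal \/ K = CScal.

Local Ltac scalar_ring := unfold ssub, sdiv; destruct HK; subst; simpl; ring.
Local Ltac scalar_field := unfold ssub, sdiv; destruct HK; subst; simpl; intros; field; auto.

Lemma sabs_ge0 (x : K) : 0 <= sabs K x.
Proof. destruct HK; subst; simpl; [apply Rabs_pos | apply Cmod_ge_0]. Qed.

Lemma sabs_mul (x y : K) : sabs K (smul K x y) = sabs K x * sabs K y.
Proof. destruct HK; subst; simpl; [apply Rabs_mult | apply Cmod_mult]. Qed.

Lemma sabs_inv (x : K) : sabs K (sinv K x) = / sabs K x.
Proof.
  destruct HK; subst; simpl; [apply Rabs_inv|].
  destruct (Ceq_dec x 0) as [->|Hx]; [|now apply Cmod_inv].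
  (* Coquelicot's [Cinv 0] is [0], as is [/ 0] *)
  replace (Cinv 0) with (RtoC 0); [now rewrite Cmod_0, Rinv_0|].
  unfold Cinv, RtoC; simpl; f_equal; unfold Rdiv; ring.
Qed.

Lemma sabs_div (x y : K) : sabs K (sdiv K x y) = sabs K x / sabs K y.
Proof. unfold sdiv. now rewrite sabs_mul, sabs_inv. Qed.

Lemma sabs_0 : sabs K (s0 K) = 0.
Proof. destruct HK; subst; simpl; [apply Rabs_R0 | apply Cmod_0]. Qed.

Lemma sabs_1 : sabs K (s1 K) = 1.
Proof. destruct HK; subst; simpl; [apply Rabs_R1 | apply Cmod_1]. Qed.

Lemma sabs_eq0 (x : K) : sabs K x = 0 -> x = s0 K.
Proof. destruct HK; subst; simpl; [apply Rabs_eq_0 | apply Cmod_eq_0]. Qed.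

Lemma sabs_gt0 (x : K) : x <> s0 K -> 0 < sabs K x.
Proof.
  intros Hx. destruct (sabs_ge0 x) as [|E]; auto.
  now exfalso; apply Hx, sabs_eq0.
Qed.

Lemma sabs_add (x y : K) : sabs K (sadd K x y) <= sabs K x + sabs K y.
Proof. destruct HK; subst; simpl; [apply Rabs_triang | apply Cmod_triangle]. Qed.

Lemma sabs_opp (x : K) : sabs K (sopp K x) = sabs K x.
Proof. destruct HK; subst; simpl; [apply Rabs_Ropp | apply Cmod_opp]. Qed.

Lemma sabs_sub (x y : K) : sabs K (ssub K x y) <= sabs K x + sabs K y.
Proof. unfold ssub. rewrite <- (sabs_opp y). apply sabs_add. Qed.

Lemma sabs_sub_sym (x y : K) : sabs K (ssub K x y) = sabs K (ssub K y x).
Proof.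
  rewrite <- sabs_opp. f_equal. scalar_ring.
Qed.

Lemma sabs_sub_triangle (x y z : K) :
  sabs K (ssub K x z) <= sabs K (ssub K x y) + sabs K (ssub K y z).
Proof.
  replace (ssub K x z) with (sadd K (ssub K x y) (ssub K y z)) by scalar_ring.
  apply sabs_add.
Qed.

Lemma ssub_0r (x : K) : ssub K x (s0 K) = x.
Proof. scalar_ring. Qed.

Lemma sabs_sub_0l (x : K) : sabs K (ssub K (s0 K) x) = sabs K x.
Proof. now rewrite sabs_sub_sym, ssub_0r. Qed.

Lemma sabs_sub_rev_triangle (x y : K) : sabs K x - sabs K y <= sabs K (ssub K x y).
Proof.
  assert (H := sabs_sub_triangle x y (s0 K)). rewrite !ssub_0r in H. lra.
Qed.

Lemma ssub_diag (x : K) : ssub K x x = s0 K.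
Proof. scalar_ring. Qed.

Lemma smul_comm (x y : K) : smul K x y = smul K y x.
Proof. scalar_ring. Qed.

Lemma smul_assoc (x y z : K) : smul K (smul K x y) z = smul K x (smul K y z).
Proof. scalar_ring. Qed.

Lemma smul_1l (x : K) : smul K (s1 K) x = x.
Proof. scalar_ring. Qed.

Lemma smul_0l (x : K) : smul K (s0 K) x = s0 K.
Proof. scalar_ring. Qed.

Lemma smul_0r (x : K) : smul K x (s0 K) = s0 K.
Proof. scalar_ring. Qed.

Lemma sadd_0l (x : K) : sadd K (s0 K) x = x.
Proof. scalar_ring. Qed.

Lemma sadd_0r (x : K) : sadd K x (s0 K) = x.
Proof. scalar_ring. Qed.

Lemma sadd_assoc (x y z : K) : sadd K (sadd K x y) z = sadd K x (sadd K y z).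
Proof. scalar_ring. Qed.

Lemma smul_sadd_r (x y z : K) :
  smul K x (sadd K y z) = sadd K (smul K x y) (smul K x z).
Proof. scalar_ring. Qed.

Lemma ssub_sadd_l (a b : K) : ssub K (sadd K a b) a = b.
Proof. scalar_ring. Qed.

Lemma smul_sdiv_swap (x y z : K) : smul K x (sdiv K y z) = smul K (sdiv K x z) y.
Proof. scalar_ring. Qed.

Lemma smul_sdiv_cancel (x y : K) : y <> s0 K -> smul K y (sdiv K x y) = x.
Proof. scalar_field. Qed.

Lemma sdiv_smul_r (a b u : K) : u <> s0 K -> b <> s0 K ->
  sdiv K (smul K a u) (smul K b u) = sdiv K a b.
Proof. scalar_field. Qed.

Lemma ssub_sdiv (A B al be : K) : A <> s0 K -> al <> s0 K ->
  ssub K (sdiv K B A) (sdiv K be al) =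
  sdiv K (ssub K (smul K (ssub K B be) al) (smul K be (ssub K A al))) (smul K A al).
Proof. scalar_field. Qed.

Lemma ssub_smul_factor (r y y' : K) : y <> s0 K ->
  ssub K (smul K r y) y' = smul K (ssub K r (sdiv K y' y)) y.
Proof. scalar_field. Qed.

End Scalars.
Lemma Series_zero : Series (fun _ => 0) = 0.
Proof.
  rewrite (Series_ext _ (fun _ => 0 * 0)) by (intros; ring).
  rewrite Series_scal_l; ring.
Qed.

Lemma ex_series_zero : ex_series (fun _ : nat => 0).
Proof.
  exists 0. apply is_series_Reals. intros e He. exists 0%nat. intros n _.
  rewrite sum_cte. unfold Rdist. now rewrite Rmult_0_l, Rminus_0_r, Rabs_R0.
Qed.

Lemma sum_f_R0_ge0 (a : nat -> R) n : (forall k, 0 <= a k) -> 0 <= sum_f_R0 a n.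
Proof. intros H; induction n; simpl; auto. specialize (H (S n)); lra. Qed.

Lemma sum_f_R0_term_le (a : nat -> R) n k : (forall k, 0 <= a k) -> (k <= n)%nat ->
  a k <= sum_f_R0 a n.
Proof.
  intros H Hk. induction n; [inversion Hk; subst; simpl; lra|].
  inversion Hk; subst; simpl.
  - pose proof (sum_f_R0_ge0 a n H). lra.
  - specialize (IHn H1). specialize (H (S n)). lra.
Qed.

Lemma sum_f_R0_le (a b : nat -> R) n : (forall k, (k <= n)%nat -> a k <= b k) ->
  sum_f_R0 a n <= sum_f_R0 b n.
Proof.
  intros H. induction n; simpl; [apply H; lia|].
  assert (a (S n) <= b (S n)) by (apply H; lia).
  assert (sum_f_R0 a n <= sum_f_R0 b n) by (apply IHn; intros; apply H; lia). lra.
Qed.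

Lemma sum_f_R0_mono (a : nat -> R) n m : (forall k, 0 <= a k) -> (n <= m)%nat ->
  sum_f_R0 a n <= sum_f_R0 a m.
Proof. intros H Hnm. induction Hnm; [lra|]. simpl. specialize (H (S m)). lra. Qed.

Lemma sum_f_R0_add_term (h : nat -> R) k k' : (forall n, 0 <= h n) -> (k < k')%nat ->
  sum_f_R0 h k + h k' <= sum_f_R0 h k'.
Proof.
  intros H0 Hk. destruct k' as [|k']; [lia|]. simpl.
  assert (sum_f_R0 h k <= sum_f_R0 h k') by (apply sum_f_R0_mono; auto; lia). lra.
Qed.

Lemma sum_f_R0_exchange (a : nat -> nat -> R) A B :
  sum_f_R0 (fun j => sum_f_R0 (fun t => a t j) B) A =
  sum_f_R0 (fun t => sum_f_R0 (fun j => a t j) A) B.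
Proof.
  induction A; [reflexivity|].
  rewrite tech5, IHA, <- sum_plus. apply sum_eq. intros t _. now rewrite tech5.
Qed.

Lemma sum_f_R0_triangle_le (a : nat -> nat -> R) J : (forall t j, 0 <= a t j) ->
  sum_f_R0 (fun j => sum_f_R0 (fun t => a t j) j) J <=
  sum_f_R0 (fun t => sum_f_R0 (fun j => a t j) J) J.
Proof.
  intros H. rewrite <- sum_f_R0_exchange. apply sum_f_R0_le. intros j Hj.
  apply sum_f_R0_mono; auto.
Qed.

Lemma ex_series_of_bounded_partial (a : nat -> R) (b : R) :
  (forall n, 0 <= a n) -> (forall n, sum_f_R0 a n <= b) ->
  ex_series a /\ Series a <= b.
Proof.
  intros H0 Hb.
  destruct (growing_cv (sum_f_R0 a)) as [l Hl].
  - intro n. simpl. specialize (H0 (S n)). lra.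
  - exists b. intros x [n ->]. apply Hb.
  - assert (Hs : is_series a l) by (apply is_series_Reals; exact Hl).
    split; [now exists l|].
    rewrite (is_series_unique _ _ Hs).
    destruct (Rle_dec l b) as [|Hn]; auto.
    destruct (Hl (l - b)) as [N HN]; [lra|].
    specialize (HN N (le_n _)). specialize (Hb N). unfold Rdist in HN.
    apply Rabs_def2 in HN. lra.
Qed.

Lemma sum_f_R0_le_Series (a : nat -> R) n : (forall k, 0 <= a k) -> ex_series a ->
  sum_f_R0 a n <= Series a.
Proof.
  intros H0 Hex. rewrite (Series_incr_n a (S n)) by (lia || auto). simpl pred.
  assert (0 <= Series (fun k => a (S n + k)%nat)); [|lra].
  rewrite <- Series_zero. apply Series_le; [intros; split; [lra|apply H0]|].
  now apply (ex_series_incr_n a (S n)).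
Qed.

Lemma term_le_Series (a : nat -> R) n : (forall k, 0 <= a k) -> ex_series a ->
  a n <= Series a.
Proof.
  intros H0 Hex. eapply Rle_trans; [|apply (sum_f_R0_le_Series a n); auto].
  now apply sum_f_R0_term_le.
Qed.

Lemma ex_series_nonneg_le (a b : nat -> R) :
  (forall n, 0 <= a n <= b n) -> ex_series b -> ex_series a.
Proof.
  intros H Hb. apply (ex_series_le a b); auto. intro n. unfold norm; simpl.
  unfold abs; simpl. rewrite Rabs_pos_eq; apply H.
Qed.

Lemma ex_series_eventually_eq (a b : nat -> R) M :
  (forall n, (M < n)%nat -> a n = b n) -> ex_series a -> ex_series b.
Proof.
  intros H Ha. apply (ex_series_incr_n b (S M)). apply (ex_series_incr_n a (S M)) in Ha.
  now apply (ex_series_ext _ _ (fun k => H (S M + k)%nat ltac:(lia))).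
Qed.

Lemma series_finite_support (a : nat -> R) M : (forall n, (M < n)%nat -> a n = 0) ->
  ex_series a /\ Series a = sum_f_R0 a M.
Proof.
  intros H.
  assert (Hex : ex_series a).
  { apply (ex_series_eventually_eq (fun _ => 0) a M); [|apply ex_series_zero].
    intros; symmetry; auto. }
  split; auto. rewrite (Series_incr_n a (S M)) by (lia || auto). simpl pred.
  rewrite (Series_ext _ (fun _ => 0)) by (intros; rewrite H; auto; lia).
  rewrite Series_zero; ring.
Qed.

Lemma series_le_reindex (a h : nat -> R) (G : nat -> nat) :
  (forall m, (1 <= m)%nat -> (G m < G (S m))%nat) ->
  (forall n, 0 <= h n) -> ex_series h -> a 0%nat = 0 ->
  (forall m, (1 <= m)%nat -> 0 <= a m <= h (G m)) ->
  ex_series a /\ Series a <= Series h.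
Proof.
  intros HG H0 Hh Ha0 Ha.
  assert (Hpartial : forall n, (1 <= n)%nat -> sum_f_R0 a n <= sum_f_R0 h (G n)).
  { induction n as [|[|n] IH]; intros Hn; [lia| |].
    - simpl. rewrite Ha0. assert (a 1%nat <= h (G 1%nat)) by (apply Ha; lia).
      assert (h (G 1%nat) <= sum_f_R0 h (G 1%nat)) by (apply sum_f_R0_term_le; auto).
      lra.
    - change (sum_f_R0 a (S (S n))) with (sum_f_R0 a (S n) + a (S (S n))).
      assert (IH' := IH ltac:(lia)).
      assert (a (S (S n)) <= h (G (S (S n)))) by (apply Ha; lia).
      assert (sum_f_R0 h (G (S n)) + h (G (S (S n))) <= sum_f_R0 h (G (S (S n))))
        by (apply sum_f_R0_add_term; auto; apply HG; lia).
      lra. }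
  apply ex_series_of_bounded_partial.
  - intros [|n]; [lra|apply Ha; lia].
  - intros [|n].
    + simpl. rewrite Ha0. eapply Rle_trans; [apply H0|]. now apply (term_le_Series h 0).
    + eapply Rle_trans; [apply Hpartial; lia|]. now apply sum_f_R0_le_Series.
Qed.

Lemma rpow_0 q : rpow 0 q = 0.
Proof. unfold rpow. destruct (Req_EM_T 0 0); congruence. Qed.

Lemma rpow_pos a q : 0 < a -> rpow a q = Rpower a q.
Proof. intros. unfold rpow. destruct (Req_EM_T a 0); auto. lra. Qed.

Lemma rpow_ge0 a q : 0 <= rpow a q.
Proof. unfold rpow. destruct (Req_EM_T a 0); [lra|]. left; apply exp_pos. Qed.

Lemma rpow_gt0 a q : 0 < a -> 0 < rpow a q.
Proof. intros. rewrite rpow_pos; auto. apply exp_pos. Qed.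

Lemma rpow_1 q : rpow 1 q = 1.
Proof. rewrite rpow_pos by lra. unfold Rpower. now rewrite ln_1, Rmult_0_r, exp_0. Qed.

Lemma rpow_le a b q : 0 < q -> 0 <= a <= b -> rpow a q <= rpow b q.
Proof.
  intros Hq [[Ha|<-] Hab].
  - rewrite !rpow_pos by lra. apply Rle_Rpower_l; lra.
  - rewrite rpow_0. apply rpow_ge0.
Qed.

Lemma rpow_lt a b q : 0 < q -> 0 <= a < b -> rpow a q < rpow b q.
Proof.
  intros Hq [[Ha|<-] Hab].
  - rewrite !rpow_pos by lra. apply Rlt_Rpower_l; lra.
  - rewrite rpow_0. apply rpow_gt0; lra.
Qed.

Lemma rpow_lt_inv a b q : 0 < q -> 0 <= a -> 0 <= b -> rpow a q < rpow b q -> a < b.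
Proof.
  intros Hq Ha Hb H. destruct (Rlt_dec a b); auto.
  assert (rpow b q <= rpow a q) by (apply rpow_le; lra). lra.
Qed.

Lemma rpow_mult a b q : 0 <= a -> 0 <= b -> rpow (a * b) q = rpow a q * rpow b q.
Proof.
  intros [Ha|<-] [Hb|<-]; rewrite ?Rmult_0_r, ?Rmult_0_l, ?rpow_0; try ring.
  rewrite !rpow_pos by nra. now rewrite Rpower_mult_distr.
Qed.

Lemma rpowK a q : 0 < q -> 0 <= a -> rpow (rpow a q) (/ q) = a.
Proof.
  intros Hq [Ha| <-]; [|now rewrite !rpow_0].
  rewrite (rpow_pos a), rpow_pos by (try apply exp_pos; lra).
  rewrite Rpower_mult, Rinv_r by lra. now apply Rpower_1.
Qed.

Lemma rpow_invK a q : 0 < q -> 0 <= a -> rpow (rpow a (/ q)) q = a.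
Proof.
  intros Hq Ha. rewrite <- (Rinv_inv q) at 2. apply rpowK; auto.
  now apply Rinv_0_lt_compat.
Qed.

Lemma rpow_add_le a b q : 0 < q -> 0 <= a -> 0 <= b ->
  rpow (a + b) q <= rpow 2 q * (rpow a q + rpow b q).
Proof.
  intros Hq Ha Hb.
  pose proof (rpow_ge0 a q). pose proof (rpow_ge0 b q).
  assert (Hm : 0 <= Rmax a b /\ a + b <= 2 * Rmax a b)
    by (unfold Rmax; destruct (Rle_dec a b); lra).
  eapply Rle_trans; [apply rpow_le with (b := 2 * Rmax a b); auto; lra|].
  rewrite rpow_mult by lra.
  apply Rmult_le_compat_l; [apply rpow_ge0|].
  unfold Rmax; destruct (Rle_dec a b); lra.
Qed.

Lemma rpow_inv_lt a e q : 0 < q -> 0 <= a -> 0 < e -> a < rpow e q -> rpow a (/ q) < e.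
Proof.
  intros Hq Ha He H. rewrite <- (rpowK e q) by lra.
  apply rpow_lt; [now apply Rinv_0_lt_compat | auto].
Qed.

Lemma lt_rpow_of_inv_lt a e q : 0 < q -> 0 <= a -> 0 < e -> rpow a (/ q) < e -> a < rpow e q.
Proof.
  intros Hq Ha He H. rewrite <- (rpow_invK a q) by lra.
  apply rpow_lt; auto. split; auto. apply rpow_ge0.
Qed.

Lemma exists_rpow_lt q e : 0 < q -> 0 < e -> exists d, 0 < d /\ rpow d q < e.
Proof.
  intros Hq He. exists (rpow (e / 2) (/ q)). split; [apply rpow_gt0; lra|].
  rewrite rpow_invK; lra.
Qed.

Lemma mul_lt_of_lt_div (n x t : R) : 0 <= n -> 0 <= x -> x < t / (n + 1) -> n * x < t.
Proof.
  intros Hn Hx H. apply (Rmult_lt_compat_r (n + 1)) in H; [|lra].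
  unfold Rdiv in H. rewrite Rmult_assoc, Rinv_l in H by lra. nra.
Qed.

Lemma exists_small_scale (c d B : R) : 0 < c -> 0 < d ->
  exists eta, 0 < eta /\ eta <= d /\ 2 * eta * (Rabs B + 1) <= c.
Proof.
  intros Hc Hd. pose proof (Rabs_pos B).
  exists (Rmin d (c / (2 * (Rabs B + 1)))).
  pose proof (Rmin_l d (c / (2 * (Rabs B + 1)))). pose proof (Rmin_r d (c / (2 * (Rabs B + 1)))).
  split; [apply Rmin_glb_lt; [lra | apply Rdiv_lt_0_compat; lra]|]. split; [lra|].
  apply Rle_trans with (c / (2 * (Rabs B + 1)) * (2 * (Rabs B + 1))); [|right; field; lra].
  rewrite (Rmult_comm 2), Rmult_assoc. apply Rmult_le_compat_r; lra.
Qed.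

Lemma INR_unbounded (B : R) : exists n, B <= INR n.
Proof.
  destruct (archimed B) as [H1 _]. destruct (Z_lt_le_dec (up B) 0).
  - exists 0%nat. simpl. assert (IZR (up B) < 0) by (now apply IZR_lt). lra.
  - exists (Z.to_nat (up B)). rewrite INR_IZR_INZ, Z2Nat.id by auto. lra.
Qed.

Lemma geom_tail_empty r J : (J <= r)%nat ->
  sum_f_R0 (fun t => if Nat.ltb r t then (/4) ^ t else 0) J = 0.
Proof.
  induction J; intros HJ; simpl; [destruct (Nat.ltb_spec r 0); auto; lia|].
  rewrite IHJ by lia. destruct (Nat.ltb_spec r (S J)); [lia|ring].
Qed.

Lemma geom_tail_eq r J : (r <= J)%nat ->
  sum_f_R0 (fun t => if Nat.ltb r t then (/4) ^ t else 0) J = ((/4) ^ r - (/4) ^ J) / 3.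
Proof.
  induction J; intros HJ.
  - replace r with 0%nat by lia. simpl. field.
  - destruct (Nat.eq_dec r (S J)) as [->|].
    + rewrite geom_tail_empty by lia. field.
    + simpl. rewrite IHJ by lia. destruct (Nat.ltb_spec r (S J)); [field|lia].
Qed.

Lemma geom_tail_le r J :
  sum_f_R0 (fun t => if Nat.ltb r t then (/4) ^ t else 0) J <= (/4) ^ r / 3.
Proof.
  assert (0 < (/4) ^ r) by (apply pow_lt; lra).
  destruct (Nat.le_gt_cases J r).
  - rewrite geom_tail_empty by auto. lra.
  - rewrite geom_tail_eq by lia. assert (0 < (/4) ^ J) by (apply pow_lt; lra). lra.
Qed.

Lemma geom_partial_le J : sum_f_R0 (fun t => (/4) ^ t) J <= 4 / 3.
Proof.
  assert (H := geom_tail_eq 0 (S J) ltac:(lia)).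
  assert (E : sum_f_R0 (fun t => if Nat.ltb 0 t then (/4) ^ t else 0) (S J) =
              sum_f_R0 (fun t => (/4) ^ t) J * / 4).
  { clear H. induction J; [simpl; field|].
    rewrite tech5, IHJ, (tech5 (fun t => (/4) ^ t)).
    destruct (Nat.ltb_spec 0 (S (S J))); [|lia].
    change ((/4) ^ S (S J)) with (/4 * (/4) ^ (S J)). ring. }
  rewrite E in H. simpl in H. assert (0 < (/4) ^ J) by (apply pow_lt; lra).
  assert (sum_f_R0 (fun t => (/4) ^ t) J = 4 * ((1 - / 4 * (/ 4) ^ J) / 3))
    by (rewrite <- H; field).
  lra.
Qed.

Section Lp.
Variable K : scalars.
Hypothesis HK : K = RScal \/ K = CScal.
Variable p : R.
Hypothesis Hp : 1 <= p.

Definition lp_term (x : seqK K) (m : nat) : R := rpow (sabs K (x m)) p.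
Definition lp_sum (x : seqK K) : R := Series (lp_term x).
Definition vsub (x y : seqK K) : seqK K := fun m => ssub K (x m) (y m).
Definition vzero : seqK K := fun _ => s0 K.

Lemma in_lp_ex_series x : in_lp K p x -> ex_series (lp_term x).
Proof. now intros []. Qed.

Lemma lp_term_ge0 x m : 0 <= lp_term x m.
Proof. apply rpow_ge0. Qed.

Lemma lp_term_zero x m : x m = s0 K -> lp_term x m = 0.
Proof. intros E. unfold lp_term. now rewrite E, sabs_0, rpow_0. Qed.

Lemma lp_term_le_sum x m : ex_series (lp_term x) -> lp_term x m <= lp_sum x.
Proof. intros. apply term_le_Series; auto using lp_term_ge0. Qed.

Lemma lp_sum_ge0 x : ex_series (lp_term x) -> 0 <= lp_sum x.
Proof. intros. eapply Rle_trans; [apply lp_term_ge0|]. now apply (lp_term_le_sum _ 0). Qed.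

Lemma lpnorm_lt_iff x e : ex_series (lp_term x) -> 0 < e ->
  lpnorm K p x < e <-> lp_sum x < rpow e p.
Proof.
  intros Hx He. pose proof (lp_sum_ge0 x Hx) as Hs. assert (Hp0 : 0 < p) by lra.
  unfold lpnorm. fold (lp_term x) (lp_sum x). split; intro H.
  - now apply lt_rpow_of_inv_lt.
  - now apply rpow_inv_lt.
Qed.

Lemma lpdist_lt_iff x y e : ex_series (lp_term (vsub x y)) -> 0 < e ->
  lpdist K p x y < e <-> lp_sum (vsub x y) < rpow e p.
Proof. apply lpnorm_lt_iff. Qed.

Lemma coord_lt_of_lp_sum x m e : ex_series (lp_term x) -> 0 < e ->
  lp_sum x < rpow e p -> sabs K (x m) < e.
Proof.
  intros Hx He H. apply (rpow_lt_inv _ _ p); [lra | apply sabs_ge0; auto | lra |].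
  eapply Rle_lt_trans; [apply lp_term_le_sum|]; eauto.
Qed.

Lemma lp_term_vsub_triangle x y z m :
  lp_term (vsub x z) m <= rpow 2 p * (lp_term (vsub x y) m + lp_term (vsub y z) m).
Proof.
  unfold lp_term, vsub. eapply Rle_trans; [|apply rpow_add_le; auto using sabs_ge0; lra].
  apply rpow_le; [lra|]. split; auto using sabs_ge0, sabs_sub_triangle.
Qed.

Lemma lp_sum_vsub_triangle x y z :
  ex_series (lp_term (vsub x y)) -> ex_series (lp_term (vsub y z)) ->
  ex_series (lp_term (vsub x z)) /\
  lp_sum (vsub x z) <= rpow 2 p * (lp_sum (vsub x y) + lp_sum (vsub y z)).
Proof.
  intros H1 H2.
  set (b := fun m => rpow 2 p * (lp_term (vsub x y) m + lp_term (vsub y z) m)).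
  assert (Eb : ex_series b)
    by (apply (ex_series_scal_l (V := R_NormedModule)), (ex_series_plus (V := R_NormedModule)); auto).
  assert (Hb : forall m, 0 <= lp_term (vsub x z) m <= b m)
    by (intros; split; [apply lp_term_ge0 | apply lp_term_vsub_triangle]).
  split; [apply (ex_series_nonneg_le _ _ Hb Eb)|].
  unfold lp_sum. eapply Rle_trans; [apply (Series_le _ _ Hb Eb)|].
  unfold b. rewrite Series_scal_l, Series_plus; auto. lra.
Qed.

Lemma ex_lp_sum_vsub x y :
  ex_series (lp_term x) -> ex_series (lp_term y) -> ex_series (lp_term (vsub x y)).
Proof.
  intros Hx Hy.
  assert (E : forall v, vsub v vzero = v).
  { intro v. apply FunctionalExtensionality.functional_extensionality. intro m.
    apply ssub_0r; auto. }
  apply (lp_sum_vsub_triangle x vzero y); rewrite ?E; auto.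
  apply (ex_series_ext (lp_term (vsub y vzero))); [|now rewrite E].
  intro m. unfold lp_term, vsub. now rewrite sabs_sub_sym.
Qed.

Lemma finite_support_lp x M : x 0%nat = s0 K -> (forall m, (M < m)%nat -> x m = s0 K) ->
  in_lp K p x /\ lp_sum x = sum_f_R0 (lp_term x) M.
Proof.
  intros H0 HM. destruct (series_finite_support (lp_term x) M) as [A B].
  - intros; apply lp_term_zero; auto.
  - repeat split; auto.
Qed.

Lemma lpnorm_zero_lt x e : (forall m, x m = s0 K) -> 0 < e -> lpnorm K p x < e.
Proof.
  intros H He. destruct (finite_support_lp x 0) as [[_ Ex] E]; auto.
  apply lpnorm_lt_iff; auto. rewrite E. simpl. rewrite lp_term_zero; auto.
  now apply rpow_gt0.
Qed.

Lemma lp_coord_tends0 x : ex_series (lp_term x) -> forall e, 0 < e ->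
  exists J, forall j, (J <= j)%nat -> sabs K (x j) < e.
Proof.
  intros Hx e He. apply ex_series_lim_0, is_lim_seq_spec in Hx.
  destruct (Hx (mkposreal _ (rpow_gt0 _ p He))) as [J HJ]. exists J. intros j Hj.
  specialize (HJ j Hj). simpl in HJ. rewrite Rminus_0_r, Rabs_pos_eq in HJ by apply lp_term_ge0.
  apply (rpow_lt_inv _ _ p); auto using sabs_ge0; lra.
Qed.

Lemma in_lp_update x r y : in_lp K p x -> (1 <= r)%nat ->
  in_lp K p (fun m => if Nat.eqb m r then y else x m).
Proof.
  intros [Hx0 Hx] Hr. split; [destruct (Nat.eqb_spec 0 r); [lia | auto]|].
  apply (ex_series_eventually_eq (lp_term x) _ r); auto.
  intros n Hn. unfold lp_term. destruct (Nat.eqb_spec n r); auto; lia.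
Qed.

Lemma lp_tail_small x d : ex_series (lp_term x) -> 0 < d ->
  exists M, Series (fun k => lp_term x (S M + k)) < d.
Proof.
  intros Hx Hd. assert (Hs := Series_correct _ Hx). apply is_series_Reals in Hs.
  destruct (Hs d Hd) as [M HM]. specialize (HM M (le_n _)).
  unfold Rdist in HM. apply Rabs_def2 in HM.
  rewrite (Series_incr_n (lp_term x) (S M)) in HM by (auto; lia). simpl pred in HM.
  exists M. lra.
Qed.

Lemma coord_lt_of_lpdist x y e m : in_lp K p x -> in_lp K p y ->
  0 < e -> lpdist K p x y < e -> sabs K (ssub K (x m) (y m)) < e.
Proof.
  intros [_ Hx] [_ Hy] He H. assert (E := ex_lp_sum_vsub x y Hx Hy).
  apply lpdist_lt_iff in H; auto. apply (coord_lt_of_lp_sum (vsub x y)); auto.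
Qed.

Lemma coord_lt_of_lpnorm x e m : in_lp K p x ->
  0 < e -> lpnorm K p x < e -> sabs K (x m) < e.
Proof. intros [_ Hx] He H. apply lpnorm_lt_iff in H; auto. now apply coord_lt_of_lp_sum. Qed.

End Lp.

Section PseudoShift.
Variable K : scalars.
Hypothesis HK : K = RScal \/ K = CScal.
Variable f : nat -> nat.
Variable w : nat -> K.
Hypothesis Hf : admissible_map f.

Lemma admissible_map_lt a b : (1 <= a)%nat -> (a < b)%nat -> (f a < f b)%nat.
Proof.
  destruct Hf as [_ H]. intros Ha Hab. induction Hab; [now apply H|].
  specialize (H m ltac:(lia)). lia.
Qed.

Lemma admissible_map_gt m : (1 <= m)%nat -> (m < f m)%nat.
Proof.
  destruct Hf as [H1 H]. induction m as [|[|m] IH]; intros Hm; [lia|lia|].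
  specialize (IH ltac:(lia)). specialize (H (S m) ltac:(lia)). lia.
Qed.

Lemma iter_ge n m : (1 <= m)%nat -> (m + n <= Nat.iter n f m)%nat.
Proof.
  induction n; intros Hm; simpl; [lia|].
  specialize (IHn Hm). pose proof (admissible_map_gt (Nat.iter n f m) ltac:(lia)). lia.
Qed.

Lemma iter_lt n a b : (1 <= a)%nat -> (a < b)%nat -> (Nat.iter n f a < Nat.iter n f b)%nat.
Proof.
  induction n; intros Ha Hab; simpl; auto.
  apply admissible_map_lt; auto. pose proof (iter_ge n a Ha). lia.
Qed.

Lemma iter_inj n a b : (1 <= a)%nat -> (1 <= b)%nat -> Nat.iter n f a = Nat.iter n f b -> a = b.
Proof.
  intros Ha Hb E. destruct (Nat.lt_total a b) as [H|[H|H]]; auto;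
    apply (iter_lt n) in H; auto; lia.
Qed.

Lemma Wprod_succ m n : Wprod K f w m (S n) = smul K (w (f m)) (Wprod K f w (f m) n).
Proof.
  induction n; simpl; [now rewrite smul_1l, smul_comm, smul_1l|].
  simpl in IHn. rewrite IHn, <- Nat.iter_succ_r. now rewrite smul_assoc.
Qed.

Lemma pshift_iter_formula n x m : (1 <= m)%nat ->
  pshift_iter K n f w x m = smul K (Wprod K f w m n) (x (Nat.iter n f m)).
Proof.
  revert m. induction n; intros m Hm; [simpl; now rewrite smul_1l|].
  unfold pshift_iter. rewrite Nat.iter_succ. fold (pshift_iter K n f w x).
  destruct m as [|m]; [lia|]. unfold pshift.
  rewrite IHn by (pose proof (admissible_map_gt (S m) Hm); lia).
  rewrite Nat.iter_succ_r, Wprod_succ. now rewrite smul_assoc.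
Qed.

Lemma pshift_iter_0 n x : (1 <= n)%nat -> pshift_iter K n f w x 0%nat = s0 K.
Proof. intros. destruct n; [lia|]. reflexivity. Qed.

Lemma pshift_iter_0_of_0 n x : x 0%nat = s0 K -> pshift_iter K n f w x 0%nat = s0 K.
Proof. intros. destruct n; [assumption | reflexivity]. Qed.

Variable p : R.
Hypothesis Hp : 1 <= p.

Lemma pshift_iter_lp_bound B n x : 0 <= B ->
  (forall m, (1 <= m)%nat -> sabs K (w (f m)) <= B) -> in_lp K p x ->
  in_lp K p (pshift_iter K n f w x) /\
  lp_sum K p (pshift_iter K n f w x) <= rpow (B ^ n) p * lp_sum K p x.
Proof.
  intros HB Hw [Hx0 Hx].
  assert (HW : forall m n, (1 <= m)%nat -> sabs K (Wprod K f w m n) <= B ^ n).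
  { intros m' n'. revert m'. induction n'; intros m' Hm; [simpl; rewrite sabs_1 by auto; lra|].
    rewrite Wprod_succ, sabs_mul, <- tech_pow_Rmult by auto.
    apply Rmult_le_compat; auto using sabs_ge0.
    apply IHn'. pose proof (admissible_map_gt m' Hm). lia. }
  destruct (series_le_reindex (lp_term K p (pshift_iter K n f w x))
              (fun j => rpow (B ^ n) p * lp_term K p x j) (Nat.iter n f)) as [E S].
  - intros m Hm. apply iter_lt; auto.
  - intros; apply Rmult_le_pos; [apply rpow_ge0 | apply lp_term_ge0].
  - now apply (ex_series_scal_l (V := R_NormedModule)).
  - apply lp_term_zero, pshift_iter_0_of_0; auto.
  - intros m Hm. split; [apply lp_term_ge0|]. unfold lp_term.
    rewrite pshift_iter_formula, sabs_mul by auto.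
    rewrite <- rpow_mult by (apply pow_le || apply sabs_ge0; auto).
    apply rpow_le; [lra|]. split; [apply Rmult_le_pos; apply sabs_ge0; auto|].
    apply Rmult_le_compat_r; auto using sabs_ge0.
  - split; [split; auto; apply pshift_iter_0_of_0; auto|].
    unfold lp_sum. now rewrite Series_scal_l in S.
Qed.

End PseudoShift.

(* [c] encodes the finite sequence [code_nth c 0, code_nth c 1, ...] through
   iterated Cantor pairing. *)
Definition code_nth (c m : nat) : nat :=
  fst (of_nat (Nat.iter m (fun c => snd (of_nat c)) c)).

Lemma code_nth_surj (v : nat -> nat) M : exists c, forall m, (m <= M)%nat -> code_nth c m = v m.
Proof.
  revert v. induction M; intros v.
  - exists (to_nat (v 0%nat, 0%nat)). intros m Hm. inversion Hm; subst.
    unfold code_nth. change (Nat.iter 0 ?g ?c) with c. now rewrite cancel_of_to.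
  - destruct (IHM (fun m => v (S m))) as [c' Hc'].
    exists (to_nat (v 0%nat, c')). intros [|m] Hm; unfold code_nth.
    + change (Nat.iter 0 ?g ?c) with c. now rewrite cancel_of_to.
    + rewrite Nat.iter_succ_r, cancel_of_to. apply Hc'. lia.
Qed.

Definition code_pair (k : nat) : nat * nat := of_nat (fst (of_nat k)).

Lemma code_pair_recurrent M c K0 : exists k, (K0 <= k)%nat /\ code_pair k = (M, c).
Proof.
  exists (to_nat (to_nat (M, c), K0)). unfold code_pair.
  rewrite cancel_of_to; cbn [fst]; rewrite cancel_of_to.
  split; [|reflexivity]. pose proof (to_nat_non_decreasing (to_nat (M, c)) K0). lia.
Qed.

Definition ratR (n : nat) : R :=
  let (a, r) := of_nat n in let (b, d) := of_nat r in (INR a - INR b) / (INR d + 1).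

Lemma ratR_dense x e : 0 < e -> exists n, Rabs (ratR n - x) < e.
Proof.
  intros He.
  destruct (INR_unbounded (/ e)) as [d' Hd'].
  set (d := S d'). assert (Hd : / e < INR d) by (unfold d; rewrite S_INR; lra).
  assert (HD : 0 < INR d) by (pose proof (Rinv_0_lt_compat e He); lra).
  set (z := up (x * INR d)).
  destruct (archimed (x * INR d)) as [Hz1 Hz2]. fold z in Hz1, Hz2.
  assert (Hab : exists a b, INR a - INR b = IZR z).
  { destruct (Z_lt_le_dec z 0).
    - exists 0%nat, (Z.to_nat (- z)). rewrite (INR_IZR_INZ (Z.to_nat _)), Z2Nat.id by lia.
      simpl. rewrite opp_IZR. ring.
    - exists (Z.to_nat z), 0%nat. rewrite (INR_IZR_INZ (Z.to_nat _)), Z2Nat.id by lia. simpl. ring. }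
  destruct Hab as [a [b Hab]].
  exists (to_nat (a, to_nat (b, d'))). unfold ratR. rewrite !cancel_of_to, Hab.
  replace (INR d' + 1) with (INR d) by (unfold d; now rewrite S_INR).
  replace (IZR z / INR d - x) with ((IZR z - x * INR d) / INR d) by (field; lra).
  rewrite Rabs_div, (Rabs_pos_eq (INR d)), Rabs_pos_eq by lra.
  apply (Rmult_lt_reg_r (INR d)); auto. unfold Rdiv. rewrite Rmult_assoc, Rinv_l by lra.
  apply (Rmult_lt_compat_r e) in Hd; auto. rewrite Rinv_l in Hd by lra. lra.
Qed.

Definition ratC (n : nat) : C := let (n1, n2) := of_nat n in (ratR n1, ratR n2).

Lemma ratC_dense (x : C) e : 0 < e -> exists n, Cmod (Cplus (ratC n) (Copp x)) < e.
Proof.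
  intros He.
  destruct (ratR_dense (fst x) (e / 2)) as [n1 H1]; [lra|].
  destruct (ratR_dense (snd x) (e / 2)) as [n2 H2]; [lra|].
  exists (to_nat (n1, n2)). unfold ratC. rewrite cancel_of_to.
  eapply Rle_lt_trans; [apply Cmod_2Rmax|]. simpl.
  assert (Hs : sqrt 2 < 2)
    by (pose proof (sqrt_sqrt 2 ltac:(lra)); pose proof (sqrt_pos 2); nra).
  assert (Hm : 0 <= Rmax (Rabs (ratR n1 + - fst x)) (Rabs (ratR n2 + - snd x)) < e / 2).
  { split; [eapply Rle_trans; [apply Rabs_pos|apply Rmax_l]|].
    unfold Rmax. destruct (Rle_dec _ _); auto. }
  pose proof (sqrt_pos 2). nra.
Qed.

Section DenseScalars.
Variable K : scalars.
Hypothesis HK : K = RScal \/ K = CScal.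

Definition dense_seq (q : nat -> K) : Prop :=
  forall x e, 0 < e -> exists n, sabs K (ssub K (q n) x) < e.

Lemma exists_dense_seq : exists q, dense_seq q.
Proof.
  unfold dense_seq. destruct HK; subst.
  - exists ratR. apply ratR_dense.
  - exists ratC. apply ratC_dense.
Qed.

Lemma small_nonzero e : 0 < e -> exists y : K, y <> s0 K /\ sabs K y < e.
Proof.
  intros He. destruct HK; subst.
  - exists (e / 2). simpl. split; [lra|]. rewrite Rabs_pos_eq; lra.
  - exists (RtoC (e / 2)). simpl. split; [intro H; injection H; lra|].
    rewrite Cmod_R, Rabs_pos_eq; lra.
Qed.

Lemma dense_seq_nonzero q : dense_seq q ->
  forall x e, 0 < e -> exists n, sabs K (ssub K (q n) x) < e /\ q n <> s0 K.
Proof.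
  intros Hq x e He.
  (* approximate a nonzero point [y] close to [x] to within [|y|] *)
  assert (Hy : exists y, y <> s0 K /\ sabs K (ssub K y x) < e / 2).
  { destruct (classic (x = s0 K)) as [->|Ex].
    - destruct (small_nonzero (e / 2)) as [y [Hy1 Hy2]]; [lra|].
      exists y. now rewrite ssub_0r.
    - exists x. rewrite ssub_diag, sabs_0 by auto. split; auto; lra. }
  destruct Hy as [y [Hy1 Hy2]]. pose proof (sabs_gt0 K HK y Hy1).
  destruct (Hq y (Rmin (e / 2) (sabs K y))) as [n Hn]; [now apply Rmin_glb_lt; lra|].
  pose proof (Rmin_l (e / 2) (sabs K y)). pose proof (Rmin_r (e / 2) (sabs K y)).
  exists n. split.
  - eapply Rle_lt_trans; [apply (sabs_sub_triangle K HK _ y)|]. lra.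
  - intro E. rewrite E, sabs_sub_0l in Hn by auto. lra.
Qed.

Lemma code_approx q : dense_seq q ->
  forall (t : nat -> K) e M, 0 < e -> exists c, forall m, (m <= M)%nat ->
    sabs K (ssub K (q (code_nth c m)) (t m)) < e /\ q (code_nth c m) <> s0 K.
Proof.
  intros Hq t e M He.
  assert (H : forall m, exists n, sabs K (ssub K (q n) (t m)) < e /\ q n <> s0 K)
    by (intro m; now apply dense_seq_nonzero).
  destruct (choice _ H) as [v Hv].
  destruct (code_nth_surj v M) as [c Hc].
  exists c. intros m Hm. rewrite Hc by auto. apply Hv.
Qed.

End DenseScalars.

Lemma eventually_forall_lt (P : nat -> nat -> Prop) N :
  (forall i, (i < N)%nat -> exists K0, forall k, (K0 <= k)%nat -> P i k) ->
  exists K0, forall i, (i < N)%nat -> forall k, (K0 <= k)%nat -> P i k.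
Proof.
  induction N; intros H; [exists 0%nat; intros; lia|].
  destruct IHN as [K1 H1]; [intros; apply H; lia|].
  destruct (H N ltac:(lia)) as [K2 H2]. exists (Nat.max K1 K2). intros i Hi k Hk.
  destruct (Nat.eq_dec i N) as [->|]; [apply H2 | apply H1]; lia.
Qed.

Lemma upper_bound_forall_lt (P : nat -> R -> Prop) N :
  (forall i, (i < N)%nat -> exists B, forall B', B <= B' -> P i B') ->
  exists B, forall i, (i < N)%nat -> forall B', B <= B' -> P i B'.
Proof.
  induction N; intros H; [exists 0; intros; lia|].
  destruct IHN as [B1 H1]; [intros; apply H; lia|].
  destruct (H N ltac:(lia)) as [B2 H2]. exists (Rmax B1 B2). intros i Hi B' HB'.
  pose proof (Rmax_l B1 B2). pose proof (Rmax_r B1 B2).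
  destruct (Nat.eq_dec i N) as [->|]; [apply H2 | apply H1]; auto; lia || lra.
Qed.

Lemma strict_incr_ge (nk : nat -> nat) : (forall k, (nk k < nk (S k))%nat) ->
  forall k, (k <= nk k)%nat.
Proof. intros H k. induction k; [lia|]. specialize (H k). lia. Qed.

Lemma strict_incr_pos (nk : nat -> nat) : (1 <= nk 0%nat)%nat ->
  (forall k, (nk k < nk (S k))%nat) -> forall k, (1 <= nk k)%nat.
Proof. intros H0 Hinc [|k]; auto. pose proof (strict_incr_ge nk Hinc (S k)). lia. Qed.

Fixpoint rec_choice {A : Type} (g : nat -> nat -> A) (h : A -> nat) (r : nat) : A :=
  match r with O => g 0%nat 0%nat | S r' => g (S r') (h (rec_choice g h r')) end.

Definition fiber_sum (L : list (nat * nat)) (G : nat * nat -> nat) (c : nat * nat -> R)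
  (j : nat) : R :=
  fold_right (fun lm acc => (if Nat.eqb (G lm) j then c lm else 0) + acc) 0 L.

Definition list_total (L : list (nat * nat)) (c : nat * nat -> R) : R :=
  fold_right (fun lm acc => c lm + acc) 0 L.

Lemma sum_f_R0_delta k c n :
  sum_f_R0 (fun j => if Nat.eqb k j then c else 0) n = if Nat.leb k n then c else 0.
Proof.
  induction n; simpl; [destruct k; simpl; auto|].
  rewrite IHn. destruct (Nat.leb_spec k n); destruct (Nat.eqb_spec k (S n));
    destruct (Nat.leb_spec k (S n)); try lia; lra.
Qed.

Lemma fiber_sum_series L G c : (forall lm, 0 <= c lm) ->
  ex_series (fiber_sum L G c) /\ Series (fiber_sum L G c) = list_total L c.
Proof.
  intros Hc. induction L as [|x L [IH1 IH2]].
  - split; [apply ex_series_zero | apply Series_zero].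
  - set (delta := fun j => if Nat.eqb (G x) j then c x else 0).
    destruct (series_finite_support delta (G x)) as [D1 D2].
    { intros n Hn. unfold delta. destruct (Nat.eqb_spec (G x) n); auto; lia. }
    assert (E : forall j, fiber_sum (x :: L) G c j = delta j + fiber_sum L G c j)
      by reflexivity.
    split.
    + apply (ex_series_ext _ _ (fun j => eq_sym (E j))).
      now apply (ex_series_plus (V := R_NormedModule)).
    + rewrite (Series_ext _ _ E), Series_plus, D2, IH2 by auto.
      unfold delta. now rewrite sum_f_R0_delta, Nat.leb_refl.
Qed.

Lemma fiber_sum_ge0 L G c j : (forall lm, 0 <= c lm) -> 0 <= fiber_sum L G c j.
Proof.
  intros Hc. induction L as [|x L IH]; simpl; [lra|].
  destruct (Nat.eqb _ _); [specialize (Hc x)|]; lra.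
Qed.

Lemma fiber_sum_ge L G c j lm : (forall lm, 0 <= c lm) -> In lm L -> G lm = j ->
  c lm <= fiber_sum L G c j.
Proof.
  intros Hc Hin HG. induction L as [|x L IH]; [destruct Hin|]. simpl.
  pose proof (fiber_sum_ge0 L G c j Hc). destruct Hin as [<-|Hin].
  - rewrite HG, Nat.eqb_refl. lra.
  - specialize (IH Hin). destruct (Nat.eqb _ _); [specialize (Hc x)|]; lra.
Qed.

Lemma list_total_le L c e : (forall lm, In lm L -> c lm <= e) ->
  list_total L c <= INR (length L) * e.
Proof.
  induction L as [|x L IH]; intros H; [simpl; lra|].
  assert (c x <= e) by (apply H; left; auto).
  assert (list_total L c <= INR (length L) * e) by (apply IH; intros; apply H; right; auto).
  unfold list_total in *. cbn [length fold_right]. rewrite S_INR. lra.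
Qed.

Section ScalarEstimates.
Variable K : scalars.
Hypothesis HK : K = RScal \/ K = CScal.

Lemma nonzero_bounds (a : nat -> K) M : (forall j, (1 <= j <= M)%nat -> a j <> s0 K) ->
  exists cm Am, 0 < cm /\ 0 < Am /\ forall j, (1 <= j <= M)%nat -> cm <= sabs K (a j) <= Am.
Proof.
  induction M; intros H; [exists 1, 1; split; [lra|split; [lra|intros; lia]]|].
  destruct IHM as [c [A [Hc [HA HH]]]]; [intros; apply H; lia|].
  assert (P := sabs_gt0 K HK (a (S M)) (H (S M) ltac:(lia))).
  exists (Rmin c (sabs K (a (S M)))), (Rmax A (sabs K (a (S M)))).
  pose proof (Rmin_l c (sabs K (a (S M)))). pose proof (Rmin_r c (sabs K (a (S M)))).
  pose proof (Rmax_l A (sabs K (a (S M)))). pose proof (Rmax_r A (sabs K (a (S M)))).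
  split; [apply Rmin_glb_lt; lra|]. split; [lra|].
  intros j Hj. destruct (Nat.eq_dec j (S M)) as [->|]; [lra|].
  destruct (HH j ltac:(lia)). lra.
Qed.

Lemma weight_large_of_approx (W u z : K) c eta B :
  sabs K (ssub K (smul K W u) z) < eta -> sabs K u < eta -> c <= sabs K z ->
  0 < eta -> 2 * eta * (Rabs B + 1) <= c -> B < sabs K W.
Proof.
  intros H1 H2 H3 H4 H5.
  assert (R1 := sabs_sub_rev_triangle K HK z (smul K W u)).
  rewrite sabs_sub_sym, sabs_mul in R1 by auto.
  pose proof (sabs_ge0 K HK W). pose proof (sabs_ge0 K HK u). pose proof (Rabs_pos B).
  destruct (Rlt_dec B (sabs K W)) as [|Hn]; auto. exfalso.
  assert (sabs K W <= Rabs B) by (pose proof (Rle_abs B); lra).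
  assert (sabs K W * sabs K u <= Rabs B * eta) by (apply Rmult_le_compat; lra).
  nra.
Qed.

Lemma ratio_small_stable (a : nat -> K) M eps : 0 < eps ->
  (forall j, (1 <= j <= M)%nat -> a j <> s0 K) ->
  exists delta, 0 < delta /\ forall m (A B : K), (1 <= m <= M)%nat ->
    sabs K (ssub K A (a m)) < delta -> sabs K B < delta -> sabs K (sdiv K B A) < eps.
Proof.
  intros Heps Ha. destruct (nonzero_bounds a M Ha) as [cm [Am [Hcm [HAm Hb]]]].
  exists (Rmin (cm / 2) (eps * cm / 4)).
  pose proof (Rmin_l (cm / 2) (eps * cm / 4)). pose proof (Rmin_r (cm / 2) (eps * cm / 4)).
  split; [apply Rmin_glb_lt; nra|]. intros m A B Hm H1 H2.
  destruct (Hb m Hm). pose proof (sabs_sub_rev_triangle K HK (a m) A).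
  rewrite sabs_sub_sym in H1 by auto.
  assert (HA : cm / 2 <= sabs K A) by lra.
  rewrite sabs_div by auto. apply (Rmult_lt_reg_r (sabs K A)); [lra|].
  unfold Rdiv. rewrite Rmult_assoc, Rinv_l, Rmult_1_r by lra.
  assert (eps * (cm / 2) <= eps * sabs K A) by (apply Rmult_le_compat_l; lra).
  assert (0 < eps * cm) by nra. lra.
Qed.

Lemma ratio_close_stable (a : nat -> K) M eps : 0 < eps ->
  (forall j, (1 <= j <= M)%nat -> a j <> s0 K) ->
  exists delta, 0 < delta /\ forall m m' (A B : K), (1 <= m <= M)%nat -> (1 <= m' <= M)%nat ->
    sabs K (ssub K A (a m)) < delta -> sabs K (ssub K B (a m')) < delta ->
    sabs K (ssub K (sdiv K B A) (sdiv K (a m') (a m))) < eps.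
Proof.
  intros Heps Ha. destruct (nonzero_bounds a M Ha) as [cm [Am [Hcm [HAm Hb]]]].
  set (delta := Rmin (cm / 2) (eps * cm * cm / (8 * Am))).
  assert (D1 : delta <= cm / 2) by apply Rmin_l.
  assert (D2 : 4 * delta * Am < eps * (cm * cm)).
  { assert (delta <= eps * cm * cm / (8 * Am)) by apply Rmin_r.
    assert (4 * delta * Am <= eps * cm * cm / 2).
    { apply Rle_trans with (4 * (eps * cm * cm / (8 * Am)) * Am);
        [apply Rmult_le_compat_r; lra | right; field; lra]. }
    assert (0 < eps * cm * cm) by (repeat apply Rmult_lt_0_compat; lra). lra. }
  exists delta. split; [apply Rmin_glb_lt; [lra|]; apply Rdiv_lt_0_compat;
    [repeat apply Rmult_lt_0_compat|]; lra|].
  intros m m' A B Hm Hm' H1 H2. destruct (Hb m Hm) as [Hm1 Hm2]. destruct (Hb m' Hm') as [_ Hm2'].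
  assert (R1 := sabs_sub_rev_triangle K HK (a m) A). rewrite sabs_sub_sym in R1 by auto.
  assert (HA : cm / 2 <= sabs K A) by lra.
  assert (NA : A <> s0 K) by (intro E; rewrite E, sabs_0 in HA by auto; lra).
  assert (Nal : a m <> s0 K) by (intro E; rewrite E, sabs_0 in Hm1 by auto; lra).
  rewrite ssub_sdiv, sabs_div, sabs_mul by auto.
  assert (Nm : sabs K (ssub K (smul K (ssub K B (a m')) (a m)) (smul K (a m') (ssub K A (a m))))
                <= delta * Am + Am * delta).
  { eapply Rle_trans; [apply sabs_sub; auto|]. rewrite !sabs_mul by auto.
    pose proof (sabs_ge0 K HK (a m)). pose proof (sabs_ge0 K HK (a m')).
    pose proof (sabs_ge0 K HK (ssub K B (a m'))). pose proof (sabs_ge0 K HK (ssub K A (a m))).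
    apply Rplus_le_compat; apply Rmult_le_compat; lra. }
  assert (D : cm / 2 * cm <= sabs K A * sabs K (a m)) by (apply Rmult_le_compat; lra).
  apply (Rmult_lt_reg_r (sabs K A * sabs K (a m))); [nra|].
  unfold Rdiv. rewrite Rmult_assoc, Rinv_l, Rmult_1_r by nra. nra.
Qed.

End ScalarEstimates.

Section FiniteSums.
Variable K : scalars.
Hypothesis HK : K = RScal \/ K = CScal.

Fixpoint ksum (g : nat -> K) (n : nat) : K :=
  match n with O => g 0%nat | S n' => sadd K (ksum g n') (g (S n')) end.

Lemma ksum_zero g n : (forall t, (t <= n)%nat -> g t = s0 K) -> ksum g n = s0 K.
Proof.
  induction n; intros H; simpl; [apply H; lia|].
  rewrite IHn by (intros; apply H; lia). rewrite (H (S n)) by lia. now apply sadd_0l.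
Qed.

Lemma ksum_single g n r : (r <= n)%nat ->
  (forall t, (t <= n)%nat -> t <> r -> g t = s0 K) -> ksum g n = g r.
Proof.
  induction n; intros Hr H; simpl; [now replace r with 0%nat by lia|].
  destruct (Nat.eq_dec r (S n)) as [->|].
  - rewrite ksum_zero by (intros; apply H; lia). now apply sadd_0l.
  - rewrite IHn; [|lia | intros; apply H; lia || auto]. rewrite (H (S n)) by lia.
    now apply sadd_0r.
Qed.

Lemma ksum_split g n r : (r <= n)%nat -> (forall t, (t < r)%nat -> g t = s0 K) ->
  ksum g n = sadd K (g r) (ksum (fun t => if Nat.ltb r t then g t else s0 K) n).
Proof.
  intros Hr H. induction Hr.
  - rewrite (ksum_single g r r); [|lia | intros t Ht Hne; apply H; lia].
    rewrite ksum_zero; [now rewrite sadd_0r|].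
    intros t Ht. destruct (Nat.ltb_spec r t); auto; lia.
  - simpl. rewrite IHHr. destruct (Nat.ltb_spec r (S m)); [|lia]. now apply sadd_assoc.
Qed.

Lemma rpow_sabs_ksum_le p g n : 0 < p ->
  (forall t t', (t <= n)%nat -> (t' <= n)%nat -> g t <> s0 K -> g t' <> s0 K -> t = t') ->
  rpow (sabs K (ksum g n)) p <= sum_f_R0 (fun t => rpow (sabs K (g t)) p) n.
Proof.
  intros Hp H. assert (Hge : forall t, 0 <= rpow (sabs K (g t)) p) by (intros; apply rpow_ge0).
  destruct (classic (exists t, (t <= n)%nat /\ g t <> s0 K)) as [[t [Ht Hg]]|Hn].
  - rewrite (ksum_single g n t Ht).
    + apply (sum_f_R0_term_le (fun t => rpow (sabs K (g t)) p)); auto.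
    + intros t' Ht' Hne. apply NNPP. intro Hg'. apply Hne, (H t' t); auto.
  - rewrite ksum_zero.
    + rewrite sabs_0, rpow_0 by auto. now apply sum_f_R0_ge0.
    + intros t Ht. apply NNPP. intro Hg. apply Hn; eauto.
Qed.

End FiniteSums.

Section FiniteVectors.
Variable K : scalars.
Hypothesis HK : K = RScal \/ K = CScal.
Variable p : R.
Hypothesis Hp : 1 <= p.

Definition block_shape (M : nat) (z : seqK K) : Prop :=
  z 0%nat = s0 K /\ (forall m, (1 <= m <= M)%nat -> z m <> s0 K) /\
  (forall m, (M < m)%nat -> z m = s0 K).

Lemma block_shape_bounded M z : block_shape M z ->
  exists A, 0 < A /\ forall m, sabs K (z m) <= A.
Proof.
  intros [Hz0 [Hz1 Hz2]]. destruct (nonzero_bounds K HK z M Hz1) as [cm [A [_ [HA Hb]]]].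
  exists A. split; auto. intros m.
  destruct (Nat.eq_dec m 0) as [->|]; [rewrite Hz0, sabs_0 by auto; lra|].
  destruct (Nat.le_gt_cases m M); [apply Hb; lia|]. rewrite Hz2, sabs_0 by auto; lra.
Qed.

Definition coded_vector (q : nat -> K) (M c : nat) : seqK K :=
  fun m => if (Nat.leb 1 m && Nat.leb m M)%bool then q (code_nth c m) else s0 K.

Lemma coded_vector_lp q M c : in_lp K p (coded_vector q M c).
Proof.
  apply (finite_support_lp K HK p _ M); [reflexivity|]. intros m Hm. unfold coded_vector.
  destruct (Nat.leb_spec 1 m); destruct (Nat.leb_spec m M); simpl; auto; lia.
Qed.

Lemma coded_vector_spec q M c :
  (forall m, (1 <= m <= M)%nat -> coded_vector q M c m = q (code_nth c m)) /\
  (forall m, (m = 0 \/ M < m)%nat -> coded_vector q M c m = s0 K).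
Proof.
  unfold coded_vector. split; intros m Hm;
    destruct (Nat.leb_spec 1 m); destruct (Nat.leb_spec m M); simpl; auto; lia.
Qed.

Lemma coded_vector_dense q : dense_seq K q ->
  forall y, in_lp K p y -> forall d, 0 < d ->
  exists M c, block_shape M (coded_vector q M c) /\
    ex_series (lp_term K p (vsub K (coded_vector q M c) y)) /\
    lp_sum K p (vsub K (coded_vector q M c) y) < d.
Proof.
  intros Hq y [Hy0 Hy] d Hd. change (ex_series (lp_term K p y)) in Hy.
  (* cut the tail of [y], then approximate its head coordinatewise *)
  destruct (lp_tail_small K p y (d / 2) Hy ltac:(lra)) as [M HM].
  assert (HNM : 0 <= INR (S M)) by apply pos_INR.
  destruct (exists_rpow_lt p (d / 2 / (INR (S M) + 1))) as [eta [Heta Heta']];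
    [lra | apply Rdiv_lt_0_compat; lra|].
  destruct (code_approx K HK q Hq y eta M Heta) as [c Hc].
  destruct (coded_vector_spec q M c) as [Hcoord Hzero].
  set (v := vsub K (coded_vector q M c) y).
  assert (Hex : ex_series (lp_term K p v))
    by (apply ex_lp_sum_vsub; auto; apply coded_vector_lp).
  exists M, c. change (vsub K (coded_vector q M c) y) with v. split; [|split; auto].
  { split; [apply Hzero; lia|]. split; [|intros; apply Hzero; lia].
    intros m Hm. rewrite Hcoord by auto. apply Hc; lia. }
  unfold lp_sum. rewrite (Series_incr_n _ (S M)) by (auto; lia). simpl pred.
  rewrite (Series_ext (fun k => lp_term K p v (S M + k)) (fun k => lp_term K p y (S M + k))).
  2:{ intros k. unfold lp_term, v, vsub. rewrite Hzero by lia. now rewrite sabs_sub_0l. }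
  assert (Hsum : sum_f_R0 (lp_term K p v) M <= sum_f_R0 (fun _ => rpow eta p) M).
  { apply sum_f_R0_le. intros m Hm. unfold lp_term, v, vsub. apply rpow_le; [lra|].
    split; [apply sabs_ge0; auto|]. destruct m as [|m].
    - rewrite Hzero, Hy0, ssub_diag, sabs_0 by (auto; lia). lra.
    - rewrite Hcoord by lia. left; apply Hc; lia. }
  rewrite sum_cte in Hsum.
  assert (rpow eta p * INR (S M) < d / 2)
    by (rewrite Rmult_comm; apply mul_lt_of_lt_div; auto; apply rpow_ge0).
  lra.
Qed.

Definition test_vector (a : nat -> K) (d : K) (M L : nat) : seqK K :=
  fun m => if (Nat.leb 1 m && Nat.leb m M)%bool then a m
           else if (Nat.leb 1 m && Nat.leb m L)%bool then d else s0 K.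

Lemma test_vector_lp a d M L : in_lp K p (test_vector a d M L).
Proof.
  apply (finite_support_lp K HK p _ (Nat.max M L)); [reflexivity|].
  intros m Hm. unfold test_vector.
  destruct (Nat.leb_spec 1 m); destruct (Nat.leb_spec m M); destruct (Nat.leb_spec m L);
    simpl; auto; lia.
Qed.

Lemma test_vector_spec a d M L cm : (forall m, (1 <= m <= M)%nat -> cm <= sabs K (a m)) ->
  (forall m, (1 <= m <= M)%nat -> test_vector a d M L m = a m) /\
  (forall m, (M < m)%nat -> sabs K (test_vector a d M L m) <= sabs K d) /\
  (forall m, (1 <= m <= L)%nat -> Rmin cm (sabs K d) <= sabs K (test_vector a d M L m)).
Proof.
  intros Ha. pose proof (Rmin_l cm (sabs K d)). pose proof (Rmin_r cm (sabs K d)).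
  pose proof (sabs_ge0 K HK d). unfold test_vector. split; [|split]; intros m Hm;
    destruct (Nat.leb_spec 1 m); destruct (Nat.leb_spec m M); destruct (Nat.leb_spec m L);
    simpl; rewrite ?sabs_0 by auto; try reflexivity; try lia; try lra.
  specialize (Ha m ltac:(lia)). lra.
Qed.

End FiniteVectors.

Section Main.
Variable K : scalars.
Hypothesis HK : K = RScal \/ K = CScal.
Variable p : R.
Hypothesis Hp : 1 <= p.
Variable N : nat.
Hypothesis HN : (2 <= N)%nat.
Variable f : nat -> nat -> nat.
Variable w : nat -> nat -> K.
Hypothesis Hf : forall i, (i < N)%nat -> admissible_map (f i).
Hypothesis Hw : forall i, (i < N)%nat -> admissible_weight K (f i) (w i).

Local Notation T i n x := (pshift_iter K n (f i) (w i) x).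
Local Notation Wi i m n := (Wprod K (f i) (w i) m n).
Local Notation Fi i n m := (Nat.iter n (f i) m).

Lemma T_formula i n x m : (i < N)%nat -> (1 <= m)%nat ->
  T i n x m = smul K (Wi i m n) (x (Fi i n m)).
Proof. intros Hi. apply pshift_iter_formula; auto. Qed.

Lemma Fi_ge i n m : (i < N)%nat -> (1 <= m)%nat -> (m + n <= Fi i n m)%nat.
Proof. intros Hi. apply iter_ge; auto. Qed.

Lemma weight_bound i : (i < N)%nat ->
  exists B, 0 <= B /\ forall m, (1 <= m)%nat -> sabs K (w i (f i m)) <= B.
Proof.
  intros Hi. destruct (Hw i Hi) as [[B HB] _]. exists (Rmax B 0). split; [apply Rmax_r|].
  intros m Hm. eapply Rle_trans; [apply HB; auto | apply Rmax_l].
Qed.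

Lemma T_lp i n x : (i < N)%nat -> in_lp K p x -> in_lp K p (T i n x).
Proof.
  intros Hi Hx. destruct (weight_bound i Hi) as [B [HB0 HB]].
  now apply (pshift_iter_lp_bound K HK (f i) (w i) (Hf i Hi) p Hp B n x).
Qed.

Definition ratio_condition (eps : R) (M : nat) (a : nat -> K) (n : nat) : Prop :=
  forall i l, (i < N)%nat -> (l < N)%nat -> i <> l ->
    (forall m m', (1 <= m <= M)%nat -> (M < m')%nat -> Fi l n m = Fi i n m' ->
       sabs K (sdiv K (Wi i m' n) (Wi l m n)) < eps) /\
    (forall m m', (1 <= m <= M)%nat -> (1 <= m' <= M)%nat -> Fi l n m = Fi i n m' ->
       sabs K (ssub K (sdiv K (Wi i m' n) (Wi l m n)) (sdiv K (a m') (a m))) < eps).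

Definition local_weight_condition : Prop :=
  forall eps, 0 < eps -> forall (K0 M L : nat) (B : R) (a : nat -> K),
    (forall j, (1 <= j <= M)%nat -> a j <> s0 K) ->
    exists n, (K0 <= n)%nat /\
      (forall i, (i < N)%nat -> forall m, (1 <= m <= L)%nat -> B < sabs K (Wi i m n)) /\
      ratio_condition eps M a n.

Definition approx_orbit : Prop :=
  forall z, in_lp K p z -> forall eta, 0 < eta -> forall K0 : nat,
    exists n, (K0 <= n)%nat /\ exists u,
      (forall i, (i < N)%nat -> forall m, (1 <= m)%nat ->
         sabs K (ssub K (T i n u m) (z m)) < eta) /\
      (forall j, (n < j)%nat -> sabs K (u j) < eta).

Lemma s_hypercyclic_late_iterate x : in_lp K p x ->
  (forall y, in_lp K p y -> forall eps, 0 < eps ->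
     exists n, (1 <= n)%nat /\ forall i, (i < N)%nat -> lpdist K p (T i n x) y < eps) ->
  forall z, in_lp K p z -> forall eta, 0 < eta -> forall K1,
  exists n, (K1 <= n)%nat /\
    forall i, (i < N)%nat -> forall m, sabs K (ssub K (T i n x m) (z m)) < eta.
Proof.
  intros Hx Hhyp z Hz eta Heta K1.
  (* modify [z] at a far coordinate [R0] where the first [K1] iterates of [x]
     under [T_0] are small; only a late iterate can then approximate it *)
  destruct (small_nonzero K HK (eta / 2)) as [th [Hth1 Hth2]]; [lra|].
  assert (Htp := sabs_gt0 K HK th Hth1).
  destruct (eventually_forall_lt (fun n j => (n < K1)%nat -> sabs K (T 0 n x j) < sabs K th / 4) K1)
    as [J2 HJ2].
  { intros n Hn. destruct (lp_coord_tends0 K HK p Hp (T 0 n x)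
        (in_lp_ex_series K p _ (T_lp 0 n x ltac:(lia) Hx)) (sabs K th / 4)) as [Jn HJn]; [lra|].
    exists Jn. auto. }
  destruct (lp_coord_tends0 K HK p Hp z (in_lp_ex_series K p _ Hz) (sabs K th / 4)) as [J3 HJ3]; [lra|].
  set (R0 := Nat.max (Nat.max J2 J3) 1).
  set (z' := fun m => if Nat.eqb m R0 then th else z m).
  assert (Hz' : in_lp K p z') by (apply in_lp_update; auto; lia).
  pose proof (Rmin_l (eta / 2) (sabs K th / 2)). pose proof (Rmin_r (eta / 2) (sabs K th / 2)).
  set (eta' := Rmin (eta / 2) (sabs K th / 2)) in *.
  destruct (Hhyp z' Hz' eta') as [n [_ Hn]]; [apply Rmin_glb_lt; lra|].
  assert (Hc : forall i, (i < N)%nat -> forall m, sabs K (ssub K (T i n x m) (z' m)) < eta')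
    by (intros i Hi m; apply (coord_lt_of_lpdist K HK p Hp); auto; [apply T_lp | apply Rmin_glb_lt]; auto; lra).
  exists n. split.
  - destruct (Nat.le_gt_cases K1 n) as [|Hlt]; auto. exfalso.
    assert (A1 := HJ2 n Hlt R0 ltac:(unfold R0; lia) Hlt).
    assert (A2 := Hc 0%nat ltac:(lia) R0). unfold z' in A2. rewrite Nat.eqb_refl in A2.
    assert (A3 := sabs_sub_rev_triangle K HK th (T 0 n x R0)).
    rewrite sabs_sub_sym in A3 by auto. lra.
  - intros i Hi m. eapply Rle_lt_trans; [apply (sabs_sub_triangle K HK _ (z' m))|].
    specialize (Hc i Hi m). unfold z' in *. destruct (Nat.eqb_spec m R0).
    + assert (A := HJ3 m ltac:(unfold R0 in *; lia)).
      assert (A' := sabs_sub K HK th (z m)). lra.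
    + rewrite ssub_diag, sabs_0 by auto. lra.
Qed.

Lemma s_hypercyclic_approx_orbit : s_hypercyclic K p N f w -> approx_orbit.
Proof.
  intros [x [Hx Hhyp]] z Hz eta Heta K0.
  destruct (lp_coord_tends0 K HK p Hp x (in_lp_ex_series K p _ Hx) eta Heta) as [J HJ].
  destruct (s_hypercyclic_late_iterate x Hx Hhyp z Hz eta Heta (Nat.max K0 J)) as [n [Hn Happ]].
  exists n. split; [lia|]. exists x. split.
  - intros i Hi m _. now apply Happ.
  - intros j Hj. apply HJ. lia.
Qed.

Lemma SBCC_approx_orbit : SBCC K p N f w -> approx_orbit.
Proof.
  intros [nk [X0 [Sk [H0 [Hinc [HX0 [Hdense [HSk [Hcoll Hblow]]]]]]]]] z Hz eta Heta K0.
  destruct (Hdense z Hz (eta / 2)) as [x0 [HX Hd]]; [lra|].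
  destruct (Hblow (eta / 2) ltac:(lra) K0 x0 HX) as [k [Hk [Hs HT]]].
  exists (nk k). split; [pose proof (strict_incr_ge nk Hinc k); lia|].
  exists (Sk k x0). assert (Hu := HSk k x0 HX). split.
  - intros i Hi m Hm. eapply Rle_lt_trans; [apply (sabs_sub_triangle K HK _ (x0 m))|].
    assert (sabs K (ssub K (T i (nk k) (Sk k x0) m) (x0 m)) < eta / 2)
      by (apply (coord_lt_of_lpdist K HK p Hp); auto; [apply T_lp | lra]; auto).
    assert (sabs K (ssub K (x0 m) (z m)) < eta / 2)
      by (apply (coord_lt_of_lpdist K HK p Hp); auto; lra).
    lra.
  - intros j Hj. assert (sabs K (Sk k x0 j) < eta / 2)
      by (apply (coord_lt_of_lpnorm K HK p Hp); auto; lra).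
    lra.
Qed.

Lemma Wprod_ratio_orbit n u i l m m' : (i < N)%nat -> (l < N)%nat -> (1 <= m)%nat ->
  (1 <= m')%nat -> Fi l n m = Fi i n m' -> T l n u m <> s0 K ->
  sdiv K (Wi i m' n) (Wi l m n) = sdiv K (T i n u m') (T l n u m).
Proof.
  intros Hi Hl Hm Hm' E NT. rewrite !T_formula in * by auto. rewrite <- E in *.
  assert (Nu : u (Fi l n m) <> s0 K) by (intro E0; apply NT; rewrite E0; now apply smul_0r).
  assert (NW : Wi l m n <> s0 K) by (intro E0; apply NT; rewrite E0; now apply smul_0l).
  now rewrite sdiv_smul_r.
Qed.

Lemma approx_orbit_local : approx_orbit -> local_weight_condition.
Proof.
  intros HA eps Heps K0 M L B a Ha.
  destruct (nonzero_bounds K HK a M Ha) as [cm [Am [Hcm [HAm Hb]]]].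
  destruct (ratio_small_stable K HK a M eps Heps Ha) as [d1 [Hd1 Hsmall]].
  destruct (ratio_close_stable K HK a M eps Heps Ha) as [d2 [Hd2 Hclose]].
  destruct (small_nonzero K HK (d1 / 2)) as [del [Hdel1 Hdel2]]; [lra|].
  set (c := Rmin cm (sabs K del)).
  assert (Hc : 0 < c /\ c <= cm)
    by (pose proof (sabs_gt0 K HK del Hdel1); split; [apply Rmin_glb_lt | apply Rmin_l]; lra).
  destruct (exists_small_scale c (Rmin (d1 / 2) d2) B) as [eta [Heta [Hd Hscale]]];
    [lra | apply Rmin_glb_lt; lra|].
  pose proof (Rmin_l (d1 / 2) d2). pose proof (Rmin_r (d1 / 2) d2). pose proof (Rabs_pos B).
  set (z := test_vector K a del M L).
  destruct (test_vector_spec K HK a del M L cm (fun m Hm => proj1 (Hb m Hm))) as [Hz1 [Hz2 Hz3]].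
  fold z c in Hz1, Hz2, Hz3.
  destruct (HA z (test_vector_lp K HK p _ _ _ _) eta Heta K0) as [n [HKn [u [Hu1 Hu2]]]].
  assert (Hnz : forall l m, (l < N)%nat -> (1 <= m <= M)%nat -> T l n u m <> s0 K).
  { intros l m Hl Hm E0. assert (A := Hu1 l Hl m ltac:(lia)).
    rewrite E0, sabs_sub_0l, Hz1 in A by auto. destruct (Hb m Hm). nra. }
  exists n. split; auto. split.
  - intros i Hi m Hm. specialize (Hu1 i Hi m ltac:(lia)). rewrite T_formula in Hu1 by (auto; lia).
    apply (weight_large_of_approx K HK _ (u (Fi i n m)) (z m) c eta); auto.
    apply Hu2. pose proof (Fi_ge i n m Hi ltac:(lia)). lia.
  - intros i l Hi Hl Hil.
    split; intros m m' Hm Hm' E; rewrite (Wprod_ratio_orbit n u i l m m') by (auto; lia).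
    + apply (Hsmall m); auto.
      * rewrite <- Hz1 by auto. assert (A := Hu1 l Hl m ltac:(lia)). lra.
      * assert (A := Hu1 i Hi m' ltac:(lia)). assert (A' := Hz2 m' Hm').
        assert (A'' := sabs_sub_triangle K HK (T i n u m') (z m') (s0 K)).
        rewrite !ssub_0r in A'' by auto. lra.
    + apply (Hclose m m'); auto; rewrite <- Hz1 by auto;
        [assert (A := Hu1 l Hl m ltac:(lia)) | assert (A := Hu1 i Hi m' ltac:(lia))]; lra.
Qed.

Lemma local_weight_diagonal q : local_weight_condition ->
  exists nk : nat -> nat, (1 <= nk 0%nat)%nat /\ (forall k, (nk k < nk (S k))%nat) /\
    (forall k i, (i < N)%nat -> forall m, (1 <= m <= k)%nat -> INR k < sabs K (Wi i m (nk k))) /\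
    (forall k, let M := fst (code_pair k) in let c := snd (code_pair k) in
       (forall j, (1 <= j <= M)%nat -> coded_vector K q M c j <> s0 K) ->
       ratio_condition (/ (INR k + 1)) M (coded_vector K q M c) (nk k)).
Proof.
  intros HL.
  set (stage := fun k prev n =>
    (prev < n)%nat /\
    (forall i, (i < N)%nat -> forall m, (1 <= m <= k)%nat -> INR k < sabs K (Wi i m n)) /\
    let M := fst (code_pair k) in let c := snd (code_pair k) in
    ((forall j, (1 <= j <= M)%nat -> coded_vector K q M c j <> s0 K) ->
     ratio_condition (/ (INR k + 1)) M (coded_vector K q M c) n)).
  assert (Hex : forall kp : nat * nat, exists n, stage (fst kp) (snd kp) n).
  { intros [k prev]. simpl.
    assert (Hk : 0 < / (INR k + 1)) by (apply Rinv_0_lt_compat; pose proof (pos_INR k); lra).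
    set (M := fst (code_pair k)). set (c := snd (code_pair k)).
    destruct (classic (forall j, (1 <= j <= M)%nat -> coded_vector K q M c j <> s0 K))
      as [Hnz|Hnz].
    - destruct (HL _ Hk (S prev) M k (INR k) _ Hnz) as [n [H1 [H2 H3]]].
      exists n. split; [lia | auto].
    - destruct (HL _ Hk (S prev) 0%nat k (INR k) (fun _ => s1 K)) as [n [H1 [H2 _]]];
        [intros; lia|].
      exists n. split; [lia | split; [auto | intros; contradiction]]. }
  destruct (choice _ Hex) as [g Hg].
  set (nk := rec_choice (fun k prev => g (k, prev)) (fun n => n)).
  assert (Hs : forall k, exists prev, stage k prev (nk k))
    by (intros [|k]; [exists 0%nat | exists (nk k)]; apply (Hg (_, _))).
  exists nk. split; [|split; [|split]].
  - destruct (Hg (0, 0)%nat) as [H _]. simpl in H. unfold nk. simpl. lia.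
  - intros k. apply (Hg (S k, nk k)).
  - intros k. destruct (Hs k) as [prev [_ [H _]]]. exact H.
  - intros k. destruct (Hs k) as [prev [_ [_ H]]]. exact H.
Qed.

Lemma local_weight_condition_sufficient : local_weight_condition -> weight_condition K N f w.
Proof.
  intros HL. destruct (exists_dense_seq K HK) as [q Hq].
  destruct (local_weight_diagonal q HL) as [nk [H0 [Hinc [Hblow Hratio]]]].
  exists nk. split; [|split; [|split]]; auto.
  - intros m i Hm Hi B. destruct (INR_unbounded B) as [n0 Hn0].
    exists (Nat.max m n0). intros k Hk.
    assert (INR n0 <= INR k) by (apply le_INR; lia).
    specialize (Hblow k i Hi m ltac:(lia)). lra.
  - intros eps Heps K0 M a Ha.
    destruct (ratio_close_stable K HK a M (eps / 2) ltac:(lra) Ha) as [eta [Heta Hclose]].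
    destruct (code_approx K HK q Hq a eta M Heta) as [c Hc].
    set (qv := coded_vector K q M c).
    assert (Hqv : forall m, (1 <= m <= M)%nat ->
                  sabs K (ssub K (qv m) (a m)) < eta /\ qv m <> s0 K).
    { intros m Hm. unfold qv. rewrite (proj1 (coded_vector_spec K q M c)) by auto. apply Hc; lia. }
    destruct (INR_unbounded (2 / eps)) as [t0 Ht0].
    destruct (code_pair_recurrent M c (Nat.max K0 t0)) as [k [Hk Ek]].
    exists k. split; [lia|].
    specialize (Hratio k). rewrite Ek in Hratio. simpl in Hratio.
    assert (Hbk := Hratio (fun j Hj => proj2 (Hqv j Hj))). fold qv in Hbk.
    assert (Hsm : / (INR k + 1) < eps / 2).
    { assert (INR t0 <= INR k) by (apply le_INR; lia). pose proof (pos_INR k).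
      rewrite <- (Rinv_inv (eps / 2)). apply Rinv_lt_contravar.
      - apply Rmult_lt_0_compat; [apply Rinv_0_lt_compat|]; lra.
      - replace (/ (eps / 2)) with (2 / eps) by (field; lra). lra. }
    intros i l Hi Hl Hil. destruct (Hbk i l Hi Hl Hil) as [B1 B2]. split.
    + intros m m' Hm Hm' E. specialize (B1 m m' Hm Hm' E). lra.
    + intros m m' Hm Hm' E. specialize (B2 m m' Hm Hm' E).
      eapply Rle_lt_trans; [apply (sabs_sub_triangle K HK _ (sdiv K (qv m') (qv m)))|].
      assert (sabs K (ssub K (sdiv K (qv m') (qv m)) (sdiv K (a m') (a m))) < eps / 2)
        by (apply Hclose; auto; apply Hqv; auto).
      lra.
Qed.

Definition block_indices (M : nat) : list (nat * nat) := list_prod (seq 0 N) (seq 1 M).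

Definition find_preimage (n M j : nat) : option (nat * nat) :=
  find (fun lm => Nat.eqb (Fi (fst lm) n (snd lm)) j) (block_indices M).

(* [S_n z = sum_(l < N, 1 <= m <= M) z_m / W^(l)_(m,n) e_(f_l^n(m))]; where several
   [(l, m)] hit the same coordinate, only the first one is kept. *)
Definition block_preimage (n M : nat) (z : seqK K) : seqK K := fun j =>
  match find_preimage n M j with
  | Some lm => sdiv K (z (snd lm)) (Wi (fst lm) (snd lm) n)
  | None => s0 K
  end.

Lemma in_block_indices M lm : In lm (block_indices M) <-> (fst lm < N)%nat /\ (1 <= snd lm <= M)%nat.
Proof. destruct lm as [l m]. unfold block_indices. rewrite in_prod_iff, !in_seq. simpl. lia. Qed.

Lemma length_block_indices M : length (block_indices M) = (N * M)%nat.
Proof. unfold block_indices. now rewrite length_prod, !length_seq. Qed.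

Lemma find_preimage_some n M j lm : find_preimage n M j = Some lm ->
  In lm (block_indices M) /\ (fst lm < N)%nat /\ (1 <= snd lm <= M)%nat /\
  Fi (fst lm) n (snd lm) = j.
Proof.
  intros H. apply find_some in H. destruct H as [H1 H2].
  pose proof (proj1 (in_block_indices M lm) H1). apply Nat.eqb_eq in H2. tauto.
Qed.

Lemma find_preimage_none n M j : find_preimage n M j = None ->
  forall l m, (l < N)%nat -> (1 <= m <= M)%nat -> Fi l n m <> j.
Proof.
  intros H l m Hl Hm E. assert (H' := find_none _ _ H (l, m)).
  rewrite in_block_indices in H'. simpl in H'. specialize (H' ltac:(auto)).
  now apply Nat.eqb_neq in H'.
Qed.

Lemma block_preimage_low n M z j : (j <= n)%nat -> block_preimage n M z j = s0 K.
Proof.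
  intros Hj. unfold block_preimage. destruct (find_preimage n M j) as [lm|] eqn:E; auto.
  apply find_preimage_some in E. destruct E as [_ [H1 [H2 H3]]].
  pose proof (Fi_ge (fst lm) n (snd lm) H1 ltac:(lia)). lia.
Qed.

Lemma block_preimage_high n M z :
  exists J, (n <= J)%nat /\ forall j, (J < j)%nat -> block_preimage n M z j = s0 K.
Proof.
  set (J := fold_right (fun lm acc => Nat.max (Fi (fst lm) n (snd lm)) acc) n (block_indices M)).
  assert (HJ : (n <= J)%nat /\ forall lm, In lm (block_indices M) -> (Fi (fst lm) n (snd lm) <= J)%nat).
  { unfold J. induction (block_indices M) as [|x L [IH1 IH2]]; simpl; [split; [lia|intros _ []]|].
    split; [lia|]. intros lm [<-|Hin]; [lia|]. specialize (IH2 lm Hin). lia. }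
  exists J. split; [apply HJ|]. intros j Hj. unfold block_preimage.
  destruct (find_preimage n M j) as [lm|] eqn:E; auto.
  apply find_preimage_some in E. destruct E as [Hin [_ [_ E]]].
  pose proof (proj2 HJ lm Hin). lia.
Qed.

Lemma block_preimage_lp n M z : in_lp K p (block_preimage n M z).
Proof.
  destruct (block_preimage_high n M z) as [J [HJ1 HJ2]].
  apply (finite_support_lp K HK p _ J); auto. apply block_preimage_low; lia.
Qed.

Lemma block_preimage_small n M z Bb Zm : 0 < Bb -> 0 <= Zm ->
  (forall l m, (l < N)%nat -> (1 <= m <= M)%nat -> Bb <= sabs K (Wi l m n)) ->
  (forall m, sabs K (z m) <= Zm) ->
  lp_sum K p (block_preimage n M z) <= INR (N * M) * rpow (Zm / Bb) p.
Proof.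
  intros HB HZ HW Hz.
  set (G := fun lm : nat * nat => Fi (fst lm) n (snd lm)).
  set (c := fun _ : nat * nat => rpow (Zm / Bb) p).
  assert (Hc : forall lm, 0 <= c lm) by (intros; apply rpow_ge0).
  destruct (fiber_sum_series (block_indices M) G c Hc) as [D1 D2].
  unfold lp_sum. eapply Rle_trans; [apply (Series_le _ (fiber_sum (block_indices M) G c)); auto|].
  - intros j. split; [apply lp_term_ge0|]. unfold lp_term, block_preimage.
    destruct (find_preimage n M j) as [lm|] eqn:E.
    + apply find_preimage_some in E. destruct E as [Hin [E1 [E2 E3]]].
      eapply Rle_trans; [|apply (fiber_sum_ge _ G c j lm); auto].
      unfold c. apply rpow_le; [lra|]. split; [apply sabs_ge0; auto|].
      rewrite sabs_div by auto. specialize (HW _ _ E1 E2). specialize (Hz (snd lm)).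
      unfold Rdiv. apply Rmult_le_compat; auto using sabs_ge0.
      * left; apply Rinv_0_lt_compat; lra.
      * apply Rinv_le_contravar; lra.
    + rewrite sabs_0, rpow_0 by auto. now apply fiber_sum_ge0.
  - rewrite D2, <- length_block_indices. apply list_total_le. intros; unfold c; lra.
Qed.

Lemma block_preimage_orbit_coord n M z eps Zm i m' : block_shape K M z ->
  (forall l m, (l < N)%nat -> (1 <= m <= M)%nat -> Wi l m n <> s0 K) ->
  (forall m, sabs K (z m) <= Zm) -> ratio_condition eps M z n -> (i < N)%nat -> (1 <= m')%nat ->
  lp_term K p (vsub K (T i n (block_preimage n M z)) z) m' <=
  fiber_sum (block_indices M) (fun lm => Fi (fst lm) n (snd lm)) (fun _ => rpow (eps * Zm) p)
    (Fi i n m').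
Proof.
  intros [Hz0 [Hz1 Hz2]] HW Hz Hb Hi Hm'.
  assert (Hc : forall lm : nat * nat, 0 <= rpow (eps * Zm) p) by (intros; apply rpow_ge0).
  unfold lp_term, vsub. rewrite T_formula by auto. unfold block_preimage.
  destruct (find_preimage n M (Fi i n m')) as [[l m]|] eqn:E.
  - apply find_preimage_some in E. simpl in E. destruct E as [Hin [E1 [E2 E3]]].
    destruct (Nat.eq_dec l i) as [->|Hli].
    + (* the coordinate is [f_i^n(m')] itself: exact cancellation *)
      assert (m = m') by (apply (iter_inj (f i) (Hf i Hi) n); auto; lia). subst m'.
      simpl. rewrite smul_sdiv_cancel, ssub_diag, sabs_0, rpow_0 by auto.
      now apply fiber_sum_ge0.
    + eapply Rle_trans; [|apply (fiber_sum_ge _ _ _ _ (l, m)); auto].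
      simpl. apply rpow_le; [lra|]. split; [apply sabs_ge0; auto|].
      destruct (Hb i l Hi E1 (not_eq_sym Hli)) as [B1 B2].
      rewrite smul_sdiv_swap by auto.
      pose proof (Hz1 m E2).
      destruct (Nat.le_gt_cases m' M) as [Hle|Hgt].
      * specialize (B2 m m' E2 ltac:(lia) E3). rewrite ssub_smul_factor, sabs_mul by auto.
        apply Rmult_le_compat; auto using sabs_ge0; lra.
      * specialize (B1 m m' E2 Hgt E3). rewrite (Hz2 m' Hgt), ssub_0r, sabs_mul by auto.
        apply Rmult_le_compat; auto using sabs_ge0; lra.
  - assert (Hgt : (M < m')%nat).
    { destruct (Nat.le_gt_cases m' M); auto. exfalso.
      apply (find_preimage_none _ _ _ E i m'); auto; lia. }
    rewrite Hz2, smul_0r, ssub_diag, sabs_0, rpow_0 by auto.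
    now apply fiber_sum_ge0.
Qed.

Lemma block_preimage_orbit_close n M z eps Zm : (1 <= n)%nat -> block_shape K M z -> 0 <= Zm ->
  (forall l m, (l < N)%nat -> (1 <= m <= M)%nat -> Wi l m n <> s0 K) ->
  (forall m, sabs K (z m) <= Zm) -> ratio_condition eps M z n ->
  forall i, (i < N)%nat ->
  ex_series (lp_term K p (vsub K (T i n (block_preimage n M z)) z)) /\
  lp_sum K p (vsub K (T i n (block_preimage n M z)) z) <= INR (N * M) * rpow (eps * Zm) p.
Proof.
  intros Hn Hsh HZ HW Hz Hb i Hi.
  set (G := fun lm : nat * nat => Fi (fst lm) n (snd lm)).
  set (c := fun _ : nat * nat => rpow (eps * Zm) p).
  assert (Hc : forall lm, 0 <= c lm) by (intros; apply rpow_ge0).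
  destruct (fiber_sum_series (block_indices M) G c Hc) as [D1 D2].
  destruct (series_le_reindex (lp_term K p (vsub K (T i n (block_preimage n M z)) z))
              (fiber_sum (block_indices M) G c) (Nat.iter n (f i))) as [R1 R2]; auto.
  - intros m Hm. apply (iter_lt (f i) (Hf i Hi)); auto.
  - intros; now apply fiber_sum_ge0.
  - apply lp_term_zero; auto. unfold vsub.
    rewrite pshift_iter_0, (proj1 Hsh) by auto. now apply ssub_diag.
  - intros m' Hm'. split; [apply lp_term_ge0|].
    now apply block_preimage_orbit_coord.
  - split; auto. unfold lp_sum. eapply Rle_trans; eauto. rewrite D2, <- length_block_indices.
    apply list_total_le. intros; unfold c; lra.
Qed.

Lemma weights_eventually_large (nk : nat -> nat) :
  (forall m i, (1 <= m)%nat -> (i < N)%nat -> forall B, exists K0, forall k, (K0 <= k)%nat ->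
      B < sabs K (Wi i m (nk k))) ->
  forall M B, exists K1, forall i, (i < N)%nat -> forall k, (K1 <= k)%nat ->
    forall m, (1 <= m <= M)%nat -> B < sabs K (Wi i m (nk k)).
Proof.
  intros Ha M B. apply eventually_forall_lt. intros i Hi.
  destruct (eventually_forall_lt (fun m k => (1 <= m)%nat -> B < sabs K (Wi i m (nk k))) (S M))
    as [K2 HK2].
  - intros [|m] Hm; [exists 0%nat; intros; lia|].
    destruct (Ha (S m) i ltac:(lia) Hi B) as [K3 HK3]. exists K3. auto.
  - exists K2. intros k Hk m Hm. apply (HK2 m ltac:(lia) k Hk). lia.
Qed.

Lemma block_preimage_estimates (nk : nat -> nat) :
  (forall k, (1 <= nk k)%nat) ->
  (forall m i, (1 <= m)%nat -> (i < N)%nat -> forall B, exists K0, forall k, (K0 <= k)%nat ->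
      B < sabs K (Wi i m (nk k))) ->
  (forall eps, 0 < eps -> forall (K0 M : nat) (a : nat -> K),
       (forall j, (1 <= j <= M)%nat -> a j <> s0 K) ->
       exists k, (K0 <= k)%nat /\ ratio_condition eps M a (nk k)) ->
  forall M z, block_shape K M z -> forall tgt, 0 < tgt -> forall K0 : nat,
  exists k, (K0 <= k)%nat /\ lp_sum K p (block_preimage (nk k) M z) < tgt /\
    forall i, (i < N)%nat ->
      ex_series (lp_term K p (vsub K (T i (nk k) (block_preimage (nk k) M z)) z)) /\
      lp_sum K p (vsub K (T i (nk k) (block_preimage (nk k) M z)) z) < tgt.
Proof.
  intros Hpos Ha Hb M z Hz tgt Htgt K0.
  destruct (block_shape_bounded K HK M z Hz) as [Am [HAm HzA]].
  set (NM := INR (N * M)). assert (HNM : 0 <= NM) by apply pos_INR.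
  (* the two bounds [NM (Am / Bb)^p] and [NM (eps Am)^p] are made small with
     [Bb = Am / d1] and [eps = d1 / Am] *)
  destruct (exists_rpow_lt p (tgt / (NM + 1))) as [d1 [Hd1 Hd1']];
    [lra | apply Rdiv_lt_0_compat; lra|].
  set (Bb := Am / d1). assert (HBb : 0 < Bb) by (apply Rdiv_lt_0_compat; lra).
  destruct (weights_eventually_large nk Ha M Bb) as [K1 HK1].
  set (eps := d1 / Am). assert (He : 0 < eps) by (apply Rdiv_lt_0_compat; lra).
  destruct (Hb eps He (Nat.max K0 K1) M z (proj1 (proj2 Hz))) as [k [Hk Hbk]].
  exists k. split; [lia|].
  assert (HW : forall l m, (l < N)%nat -> (1 <= m <= M)%nat -> Bb <= sabs K (Wi l m (nk k)))
    by (intros l m Hl Hm; left; apply (HK1 l Hl k ltac:(lia) m Hm)).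
  split.
  - eapply Rle_lt_trans; [apply (block_preimage_small (nk k) M z Bb Am); auto; lra|].
    unfold Bb. replace (Am / (Am / d1)) with d1 by (field; lra).
    apply mul_lt_of_lt_div; auto. apply rpow_ge0.
  - intros i Hi.
    destruct (block_preimage_orbit_close (nk k) M z eps Am (Hpos k) Hz)
      with (i := i) as [E1 E2]; auto; [lra| |].
    { intros l m Hl Hm E. specialize (HW l m Hl Hm). rewrite E, sabs_0 in HW by auto. lra. }
    split; auto. eapply Rle_lt_trans; eauto.
    unfold eps. replace (d1 / Am * Am) with d1 by (field; lra).
    apply mul_lt_of_lt_div; auto. apply rpow_ge0.
Qed.

Lemma weight_condition_SBCC : weight_condition K N f w -> SBCC K p N f w.
Proof.
  intros [nk [H0 [Hinc [Ha Hb]]]].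
  assert (Hpos := strict_incr_pos nk H0 Hinc).
  destruct (exists_dense_seq K HK) as [q Hq].
  set (X0 := fun x => exists M, block_shape K M x).
  set (size := fun x => epsilon (inhabits 0%nat) (fun M => block_shape K M x)).
  assert (Hsize : forall x, X0 x -> block_shape K (size x) x)
    by (intros x HX; apply epsilon_spec; auto).
  exists nk, X0, (fun k x => block_preimage (nk k) (size x) x).
  split; auto. split; auto. split; [|split; [|split; [|split]]].
  - intros x [M [Hx0 [_ Hx2]]]. apply (finite_support_lp K HK p x M Hx0 Hx2).
  - intros y Hy e He.
    destruct (coded_vector_dense K HK p Hp q Hq y Hy (rpow e p) (rpow_gt0 _ _ He))
      as [M [c [Hsh [Hex Hlt]]]].
    exists (coded_vector K q M c). split; [now exists M | now apply lpdist_lt_iff].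
  - intros k x _. apply block_preimage_lp.
  - intros x [M [Hx0 [_ Hx2]]] i Hi e He. exists M. intros k Hk.
    apply lpnorm_zero_lt; auto. intros [|m]; [now apply pshift_iter_0|].
    rewrite T_formula by (auto; lia). rewrite Hx2; [now apply smul_0r|].
    pose proof (Fi_ge i (nk k) (S m) Hi ltac:(lia)). pose proof (strict_incr_ge nk Hinc k). lia.
  - intros e He K0 x0 HX.
    destruct (block_preimage_estimates nk Hpos Ha Hb (size x0) x0 (Hsize x0 HX)
                (rpow e p) (rpow_gt0 _ _ He) K0) as [k [Hk [H1 H2]]].
    exists k. split; auto. split.
    + apply lpnorm_lt_iff; auto. apply block_preimage_lp.
    + intros i Hi. destruct (H2 i Hi) as [E1 E2]. now apply lpdist_lt_iff.
Qed.

Lemma iterate_norm_growth : exists Cn : nat -> R,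
  (forall n, 1 <= Cn n) /\ (forall a b, (a <= b)%nat -> Cn a <= Cn b) /\
  (forall i n x, (i < N)%nat -> in_lp K p x -> lp_sum K p (T i n x) <= Cn n * lp_sum K p x).
Proof.
  destruct (upper_bound_forall_lt (fun i B => forall m, (1 <= m)%nat -> sabs K (w i (f i m)) <= B) N)
    as [B0 HB0].
  { intros i Hi. destruct (weight_bound i Hi) as [B [_ HB]]. exists B. intros B' HB' m Hm.
    eapply Rle_trans; eauto. }
  set (beta := Rmax B0 1). assert (Hbeta : 1 <= beta) by apply Rmax_r.
  exists (fun n => rpow (beta ^ n) p). split; [|split].
  - intros n. rewrite <- (rpow_1 p). apply rpow_le; [lra|]. split; [lra|]. now apply pow_R1_Rle.
  - intros a b Hab. apply rpow_le; [lra|]. split; [pose proof (pow_R1_Rle beta a Hbeta); lra|].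
    now apply Rle_pow.
  - intros i n x Hi Hx.
    apply (pshift_iter_lp_bound K HK (f i) (w i) (Hf i Hi) p Hp beta n x); auto; [lra|].
    intros m Hm. apply HB0; auto. apply Rmax_l.
Qed.

Lemma s_hypercyclic_of_dense_approx q x : dense_seq K q -> in_lp K p x ->
  (forall M c d, block_shape K M (coded_vector K q M c) -> 0 < d ->
     exists n, (1 <= n)%nat /\ forall i, (i < N)%nat ->
       ex_series (lp_term K p (vsub K (T i n x) (coded_vector K q M c))) /\
       lp_sum K p (vsub K (T i n x) (coded_vector K q M c)) < d) ->
  s_hypercyclic K p N f w.
Proof.
  intros Hq Hx Happ. exists x. split; auto. intros y Hy e He.
  set (A := rpow 2 p). assert (HA : 1 <= A) by (unfold A; rewrite <- (rpow_1 p); apply rpow_le; lra).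
  set (E := rpow e p). assert (HE : 0 < E) by (apply rpow_gt0; auto).
  destruct (coded_vector_dense K HK p Hp q Hq y Hy (E / (2 * A)))
    as [M [c [Hsh [Hex1 Hlt1]]]]; [apply Rdiv_lt_0_compat; lra|].
  destruct (Happ M c (E / (2 * A)) Hsh) as [n [Hn Hc]]; [apply Rdiv_lt_0_compat; lra|].
  exists n. split; auto. intros i Hi. destruct (Hc i Hi) as [F1 F2].
  destruct (lp_sum_vsub_triangle K HK p Hp (T i n x) (coded_vector K q M c) y F1 Hex1)
    as [D1 D2].
  apply lpdist_lt_iff; auto. fold E A in D2 |- *.
  assert (A * (lp_sum K p (vsub K (T i n x) (coded_vector K q M c)) +
               lp_sum K p (vsub K (coded_vector K q M c) y)) < A * (E / (2 * A) + E / (2 * A)))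
    by (apply Rmult_lt_compat_l; lra).
  replace (A * (E / (2 * A) + E / (2 * A))) with E in * by (field; lra). lra.
Qed.

Section Gluing.
Variables (nr J : nat -> nat) (b : nat -> seqK K) (Cn : nat -> R).
Hypothesis Hnr0 : (1 <= nr 0%nat)%nat.
Hypothesis HnrJ : forall r, (nr r <= J r)%nat.
Hypothesis HJnr : forall r, (J r < nr (S r))%nat.
Hypothesis Hb_lp : forall r, in_lp K p (b r).
Hypothesis Hb_low : forall r j, (j <= nr r)%nat -> b r j = s0 K.
Hypothesis Hb_high : forall r j, (J r < j)%nat -> b r j = s0 K.
Hypothesis HCn1 : forall n, 1 <= Cn n.
Hypothesis HCn_mono : forall a c, (a <= c)%nat -> Cn a <= Cn c.
Hypothesis HCn : forall i n x, (i < N)%nat -> in_lp K p x -> lp_sum K p (T i n x) <= Cn n * lp_sum K p x.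

Definition prev_end (r : nat) : nat := match r with O => 0%nat | S r' => J r' end.

Hypothesis Hb_small : forall r, lp_sum K p (b r) * Cn (prev_end r) <= (/4) ^ r.

Definition glued : seqK K := fun j => ksum K (fun t => b t j) j.


Lemma nr_J_lt s r : (s < r)%nat -> (J s < nr r)%nat.
Proof.
  intros H. destruct r as [|r]; [lia|].
  enough (J s <= J r)%nat by (specialize (HJnr r); lia).
  assert (Hsr : (s <= r)%nat) by lia. clear H.
  induction Hsr as [|r' H IH]; [lia|]. specialize (HJnr r'). specialize (HnrJ (S r')). lia.
Qed.

Lemma blocks_disjoint t t' j : b t j <> s0 K -> b t' j <> s0 K -> t = t'.
Proof.
  assert (supp : forall t j, b t j <> s0 K -> (nr t < j <= J t)%nat).
  { intros s i H. destruct (Nat.le_gt_cases i (nr s)); [exfalso; apply H, Hb_low; auto|].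
    destruct (Nat.le_gt_cases i (J s)); [lia|]. exfalso; apply H, Hb_high; auto. }
  intros H1 H2. apply supp in H1. apply supp in H2.
  destruct (Nat.lt_total t t') as [H|[H|H]]; auto;
    [specialize (nr_J_lt t t' H) | specialize (nr_J_lt t' t H)]; lia.
Qed.

Lemma block_lp_sum_le t : lp_sum K p (b t) <= (/4) ^ t.
Proof.
  specialize (Hb_small t). specialize (HCn1 (prev_end t)).
  assert (0 <= lp_sum K p (b t)) by (apply lp_sum_ge0, Hb_lp). nra.
Qed.

Lemma glued_lp : in_lp K p glued.
Proof.
  split; [unfold glued; simpl; apply Hb_low; lia|].
  apply (ex_series_of_bounded_partial _ (4 / 3)); [intros; apply lp_term_ge0|].
  intros Jm. eapply Rle_trans.
  - apply (sum_f_R0_le _ (fun j => sum_f_R0 (fun t => lp_term K p (b t) j) j)).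
    intros j _. unfold glued. apply rpow_sabs_ksum_le; [auto | lra |].
    intros t t' _ _ H1 H2. eapply blocks_disjoint; eauto.
  - eapply Rle_trans; [apply sum_f_R0_triangle_le; intros; apply lp_term_ge0|].
    eapply Rle_trans; [|apply (geom_partial_le Jm)]. apply sum_f_R0_le. intros t _.
    eapply Rle_trans; [|apply block_lp_sum_le].
    apply sum_f_R0_le_Series; [intros; apply lp_term_ge0 | apply Hb_lp].
Qed.

Definition glued_tail (r : nat) : seqK K :=
  fun j => ksum K (fun t => if Nat.ltb r t then b t j else s0 K) j.

Lemma glued_tail_lp r : in_lp K p (glued_tail r) /\
  lp_sum K p (glued_tail r) <= (/4) ^ r / 3 / Cn (nr r).
Proof.
  assert (HC : 0 < Cn (nr r)) by (specialize (HCn1 (nr r)); lra).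
  assert (Hpartial : forall Jm, sum_f_R0 (lp_term K p (glued_tail r)) Jm <= (/4) ^ r / 3 / Cn (nr r)).
  { intros Jm. eapply Rle_trans.
    { apply (sum_f_R0_le _ (fun j => sum_f_R0 (fun t => if Nat.ltb r t then lp_term K p (b t) j else 0) j)).
      intros j _. unfold glued_tail, lp_term. eapply Rle_trans.
      - apply rpow_sabs_ksum_le; [auto | lra |].
        intros t t' _ _ H1 H2. destruct (Nat.ltb r t); destruct (Nat.ltb r t'); try tauto.
        eapply blocks_disjoint; eauto.
      - right. apply sum_eq. intros t _. destruct (Nat.ltb r t); auto.
        now rewrite sabs_0, rpow_0. }
    eapply Rle_trans; [apply sum_f_R0_triangle_le; intros; destruct (Nat.ltb r _);
                       [apply lp_term_ge0 | lra]|].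
    (* a later block [b t] carries the factor [Cn (prev_end t) >= Cn (nr r)] *)
    apply Rle_trans with (sum_f_R0 (fun t => (if Nat.ltb r t then (/4) ^ t else 0) * / Cn (nr r)) Jm).
    - apply sum_f_R0_le. intros t _. destruct (Nat.ltb_spec r t) as [Hrt|].
      + eapply Rle_trans; [apply (sum_f_R0_le_Series (lp_term K p (b t)) Jm);
                           [intros; apply lp_term_ge0 | apply Hb_lp]|].
        assert (Cn (nr r) <= Cn (prev_end t)).
        { apply HCn_mono. destruct t as [|t]; [lia|]. simpl.
          destruct (Nat.eq_dec r t) as [->|]; [apply HnrJ|].
          pose proof (nr_J_lt r t ltac:(lia)). pose proof (HnrJ t). pose proof (HnrJ r). lia. }
        specialize (Hb_small t). assert (0 <= lp_sum K p (b t)) by (apply lp_sum_ge0, Hb_lp).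
        apply (Rmult_le_reg_r (Cn (nr r))); auto. rewrite Rmult_assoc, Rinv_l by lra.
        fold (lp_sum K p (b t)). nra.
      + rewrite Rmult_0_l, sum_eq_R0; [lra | intros; lra].
    - rewrite <- scal_sum, Rmult_comm. unfold Rdiv at 2.
      apply Rmult_le_compat_r; [left; now apply Rinv_0_lt_compat | apply geom_tail_le]. }
  assert (H0 : glued_tail r 0%nat = s0 K)
    by (unfold glued_tail; simpl; destruct (Nat.ltb_spec r 0); auto; lia).
  destruct (ex_series_of_bounded_partial _ _ (lp_term_ge0 K p (glued_tail r)) Hpartial).
  repeat split; auto.
Qed.

Lemma glued_orbit_close r i z : (i < N)%nat ->
  ex_series (lp_term K p (vsub K (T i (nr r) (b r)) z)) ->
  ex_series (lp_term K p (vsub K (T i (nr r) glued) z)) /\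
  lp_sum K p (vsub K (T i (nr r) glued) z) <=
    rpow 2 p * ((/4) ^ r / 3 + lp_sum K p (vsub K (T i (nr r) (b r)) z)).
Proof.
  intros Hi Hez. destruct (glued_tail_lp r) as [Htl1 Htl2]. set (n := nr r) in *.
  assert (Hn1 : (1 <= n)%nat).
  { unfold n. destruct r; auto. pose proof (nr_J_lt 0 (S r)). pose proof (HnrJ 0). lia. }
  (* beyond [n], [glued] is [b r] plus the tail: earlier blocks end before [n] *)
  assert (Eq : forall m, lp_term K p (vsub K (T i n glued) (T i n (b r))) m =
                         lp_term K p (T i n (glued_tail r)) m).
  { intros m. unfold lp_term, vsub. destruct m as [|m].
    - rewrite !pshift_iter_0 by auto. now rewrite ssub_diag.
    - rewrite !(T_formula i n _ (S m)) by (auto; lia).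
      set (j := Fi i n (S m)). assert (Hj : (n < j)%nat) by (pose proof (Fi_ge i n (S m) Hi ltac:(lia)); lia).
      assert (Ex : glued j = sadd K (b r j) (glued_tail r j)).
      { unfold glued, glued_tail. apply (ksum_split K HK (fun t => b t j) j r).
        - assert (S r <= nr r)%nat by (clear -Hnr0 HnrJ HJnr; induction r; [lia|];
            specialize (HJnr r); specialize (HnrJ r); lia). lia.
        - intros t Ht. apply Hb_high. pose proof (nr_J_lt t r Ht). lia. }
      now rewrite Ex, smul_sadd_r, ssub_sadd_l. }
  assert (HTtl : lp_sum K p (T i n (glued_tail r)) <= (/4) ^ r / 3).
  { eapply Rle_trans; [apply HCn; auto|]. assert (0 < Cn n) by (specialize (HCn1 n); lra).
    apply Rle_trans with (Cn n * ((/4) ^ r / 3 / Cn n)); [apply Rmult_le_compat_l; lra|].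
    right; field; lra. }
  assert (Hd1 : ex_series (lp_term K p (vsub K (T i n glued) (T i n (b r))))).
  { apply ex_lp_sum_vsub; auto; apply in_lp_ex_series, T_lp; auto using glued_lp. }
  destruct (lp_sum_vsub_triangle K HK p Hp (T i n glued) (T i n (b r)) z Hd1 Hez) as [D1 D2].
  split; auto. eapply Rle_trans; eauto. apply Rmult_le_compat_l; [apply rpow_ge0|].
  unfold lp_sum at 1. rewrite (Series_ext _ _ Eq). fold (lp_sum K p (T i n (glued_tail r))). lra.
Qed.

End Gluing.

(* [t = (n, Je, b)]: the [r]-th block [b] lives on [(n, Je]], after the previous
   block end [Jp]. *)
Definition block_spec (Cn : nat -> R) (q : nat -> K) (r Jp : nat) (t : nat * nat * seqK K) :
  Prop :=
  let n := fst (fst t) in let Je := snd (fst t) in let b := snd t in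
  let M := fst (code_pair r) in let z := coded_vector K q M (snd (code_pair r)) in
  (Jp < n)%nat /\ (n <= Je)%nat /\ in_lp K p b /\
  (forall j, (j <= n)%nat -> b j = s0 K) /\ (forall j, (Je < j)%nat -> b j = s0 K) /\
  lp_sum K p b * Cn Jp <= (/4) ^ r /\
  (block_shape K M z -> forall i, (i < N)%nat ->
     ex_series (lp_term K p (vsub K (T i n b) z)) /\ lp_sum K p (vsub K (T i n b) z) <= (/4) ^ r).

Lemma exists_block_spec (nk : nat -> nat) (Cn : nat -> R) q :
  (forall k, (1 <= nk k)%nat) -> (forall k, (nk k < nk (S k))%nat) ->
  (forall m i, (1 <= m)%nat -> (i < N)%nat -> forall B, exists K0, forall k, (K0 <= k)%nat ->
      B < sabs K (Wi i m (nk k))) ->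
  (forall eps, 0 < eps -> forall (K0 M : nat) (a : nat -> K),
       (forall j, (1 <= j <= M)%nat -> a j <> s0 K) ->
       exists k, (K0 <= k)%nat /\ ratio_condition eps M a (nk k)) ->
  (forall n, 1 <= Cn n) ->
  forall r Jp, exists t, block_spec Cn q r Jp t.
Proof.
  intros Hpos Hinc Ha Hb HC r Jp. unfold block_spec.
  set (M := fst (code_pair r)). set (z := coded_vector K q M (snd (code_pair r))).
  assert (H4 : 0 < (/4) ^ r) by (apply pow_lt; lra). pose proof (HC Jp).
  destruct (classic (block_shape K M z)) as [Hsh|Hsh].
  - destruct (block_preimage_estimates nk Hpos Ha Hb M z Hsh ((/4) ^ r / Cn Jp)
                ltac:(apply Rdiv_lt_0_compat; lra) (S Jp)) as [k [Hk [Hn Herr]]].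
    destruct (block_preimage_high (nk k) M z) as [Je [HJe HJe']].
    exists (nk k, Je, block_preimage (nk k) M z). simpl.
    assert ((/4) ^ r / Cn Jp <= (/4) ^ r).
    { unfold Rdiv. rewrite <- (Rmult_1_r ((/4) ^ r)) at 2. apply Rmult_le_compat_l; [lra|].
      rewrite <- Rinv_1. apply Rinv_le_contravar; lra. }
    split; [pose proof (strict_incr_ge nk Hinc k); lia|].
    split; auto. split; [apply block_preimage_lp|].
    split; [intros; now apply block_preimage_low|]. split; auto. split.
    + apply (Rmult_lt_compat_r (Cn Jp)) in Hn; [|lra]. unfold Rdiv in Hn.
      rewrite Rmult_assoc, Rinv_l, Rmult_1_r in Hn by lra. lra.
    + intros _ i Hi. destruct (Herr i Hi) as [E1 E2]. split; auto. lra.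
  - (* not a valid target: an empty block *)
    exists (S Jp, S Jp, vzero K). simpl.
    destruct (finite_support_lp K HK p (vzero K) 0 eq_refl (fun _ _ => eq_refl)) as [Z1 Z2].
    split; [lia|]. split; [lia|]. split; auto. split; [reflexivity|]. split; [reflexivity|].
    split; [|intros; contradiction].
    rewrite Z2. simpl. unfold lp_term, vzero. rewrite sabs_0, rpow_0 by auto. lra.
Qed.

Lemma weight_condition_s_hypercyclic : weight_condition K N f w -> s_hypercyclic K p N f w.
Proof.
  intros [nk [H0 [Hinc [Ha Hb]]]].
  assert (Hpos := strict_incr_pos nk H0 Hinc).
  destruct iterate_norm_growth as [Cn [HC1 [HC2 HC3]]].
  destruct (exists_dense_seq K HK) as [q Hq].
  destruct (choice (fun rJ t => block_spec Cn q (fst rJ) (snd rJ) t)) as [g Hg].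
  { intros [r Jp]. now apply (exists_block_spec nk). }
  set (st := rec_choice (fun r Jp => g (r, Jp)) (fun t => snd (fst t))).
  set (nr := fun r => fst (fst (st r))). set (Jr := fun r => snd (fst (st r))).
  set (br := fun r => snd (st r)).
  assert (HS : forall r, block_spec Cn q r (prev_end Jr r) (st r))
    by (intros [|r]; apply (Hg (_, _))).
  assert (Hnr0 : (1 <= nr 0%nat)%nat) by (destruct (HS 0%nat) as [A _]; unfold nr; simpl in A; lia).
  assert (HnrJ : forall r, (nr r <= Jr r)%nat) by (intros r; apply (HS r)).
  assert (HJnr : forall r, (Jr r < nr (S r))%nat) by (intros r; apply (HS (S r))).
  assert (Hb_lp : forall r, in_lp K p (br r)) by (intros r; apply (HS r)).
  assert (Hb_low : forall r j, (j <= nr r)%nat -> br r j = s0 K) by (intros r; apply (HS r)).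
  assert (Hb_high : forall r j, (Jr r < j)%nat -> br r j = s0 K) by (intros r; apply (HS r)).
  assert (Hb_small : forall r, lp_sum K p (br r) * Cn (prev_end Jr r) <= (/4) ^ r)
    by (intros r; apply (HS r)).
  assert (Hgl := glued_orbit_close nr Jr br Cn Hnr0 HnrJ HJnr Hb_lp Hb_low Hb_high
                   HC1 HC2 HC3 Hb_small).
  apply (s_hypercyclic_of_dense_approx q (glued br) Hq);
    [now apply (glued_lp nr Jr br Cn)|].
  intros M c d Hsh Hd. set (A := rpow 2 p). assert (HA : 0 < A) by (apply rpow_gt0; lra).
  destruct (pow_lt_1_zero (/4) ltac:(rewrite Rabs_pos_eq; lra) (d / (2 * A))) as [t0 Ht0];
    [apply Rdiv_lt_0_compat; lra|].
  destruct (code_pair_recurrent M c t0) as [r [Hr Er]].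
  specialize (Ht0 r Hr). rewrite Rabs_pos_eq in Ht0 by (apply pow_le; lra).
  exists (nr r). split; [pose proof (Hpos 0%nat); destruct r; [auto|]; pose proof (HJnr r); pose proof (HnrJ r); lia|].
  intros i Hi. destruct (HS r) as [_ [_ [_ [_ [_ [_ S7]]]]]].
  rewrite Er in S7. simpl in S7. destruct (S7 Hsh i Hi) as [E1 E2].
  destruct (Hgl r i _ Hi E1) as [F1 F2]. split; auto. fold A in F2.
  eapply Rle_lt_trans; [apply F2|].
  apply Rle_lt_trans with (A * ((/4) ^ r / 3 + (/4) ^ r)).
  { apply Rmult_le_compat_l; [lra|]. apply Rplus_le_compat_l. exact E2. }
  assert (0 <= (/4) ^ r) by (apply pow_le; lra).
  replace d with (A * (d / (2 * A) * 2)) by (field; lra).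
  apply Rmult_lt_compat_l; lra.
Qed.

End Main.

Theorem theorem3p3 (K : scalars) (HK : K = RScal \/ K = CScal)
  (p : R) (Hp : 1 <= p) (N : nat) (HN : (2 <= N)%nat)
  (f : nat -> nat -> nat) (w : nat -> nat -> K)
  (Hf : forall i, (i < N)%nat -> admissible_map (f i))
  (Hw : forall i, (i < N)%nat -> admissible_weight K (f i) (w i)) :
  (s_hypercyclic K p N f w <-> SBCC K p N f w) /\
  (SBCC K p N f w <-> weight_condition K N f w).
Proof.
  assert (necessity : forall P : Prop, (P -> approx_orbit K p N f w) -> P -> weight_condition K N f w).
  { intros P HP H. apply (local_weight_condition_sufficient K HK N HN f w),
      (approx_orbit_local K HK p N HN f w Hf), HP, H. }
  pose proof (s_hypercyclic_approx_orbit K HK p Hp N HN f w Hf Hw) as i_approx.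
  pose proof (SBCC_approx_orbit K HK p Hp N HN f w Hf Hw) as ii_approx.
  pose proof (weight_condition_SBCC K HK p Hp N HN f w Hf) as iii_ii.
  pose proof (weight_condition_s_hypercyclic K HK p Hp N HN f w Hf Hw) as iii_i.
  split; split; intros H.
  - apply iii_ii, (necessity _ i_approx), H.
  - apply iii_i, (necessity _ ii_approx), H.
  - apply (necessity _ ii_approx), H.
  - apply iii_ii, H.
Qed.
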